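(* In a phase space $Z_2$, the permanent source produced time harmonic perturbation propagation problem is well posed on every finite interval of time $[0,t_0]$, and the null solution is unstable (in the sense of Lyapunov) with respect to the class $Z_2$ of amplitudes.
   Context: Fix constants $U_0,c_0,\rho_0>0$, $\omega_f\in\mathbb{R}$, $h$ the Heaviside function. The permanent source produced time harmonic perturbation propagation problem with amplitude $A=(F,G,H,P)$: find $(v_x',v_y',v_z',p')$, zero for $t\le0$, with $\partial_t v_x' + U_0\partial_x v_x' + \frac1{\rho_0}\partial_x p' = h(t)F\sin\omega_f t$, $\partial_t v_y' + U_0\partial_x v_y' + \frac1{\rho_0}\partial_y p' = h(t)G\sin\omega_f t$, $\partial_t v_z' + U_0\partial_x v_z' + \frac1{\rho_0}\partial_z p' = h(t)H\sin\omega_f t$, $\partial_t p' + U_0\partial_xp' + \rho_0c_0^2(\partial_xv_x'+\partial_yv_y'+\partial_zv_z') = h(t)P\sin\omega_f t$. Phase space $Z_2$: fix real constants $k_i,l_i,m_i$ ($i=1,\dots,4$) with $k_1k_2k_3k_4\neq0$ and $\Delta = \frac{c_0\rho_0}{k_3k_4}[r_1(k_2k_3k_4+k_3m_2m_4+k_4l_2l_3) + r_2(k_1k_3k_4+k_3m_1m_4+k_4l_1l_3)]\neq0$, $r_i=\sqrt{k_i^2+l_i^2+m_i^2}$. With $\xi_i=k_ix+l_iy+m_iz$, $Z_2$ is the set of systems $(F,G,H,P)$ of bounded $C^1$ functions on $\mathbb{R}^3$ of the form $F = k_1f_1(\xi_1)+k_2f_2(\xi_2)+\frac{l_3}{k_3}f_3(\xi_3)+\frac{m_4}{k_4}f_4(\xi_4)$,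 $G = l_1f_1(\xi_1)+l_2f_2(\xi_2)-f_3(\xi_3)$, $H = m_1f_1(\xi_1)+m_2f_2(\xi_2)-f_4(\xi_4)$, $P = -c_0\rho_0r_1f_1(\xi_1)+c_0\rho_0r_2f_2(\xi_2)$ with $f_i$ continuously differentiable, normed by $\|A\|_{Z_2}=\max\{\sup|F|,\sup|G|,\sup|H|,\sup|P|\}$. Well-posedness on $[0,t_0]$: (a) for every $A\in Z_2$ there is a unique solution defined for $t\in[0,t_0]$; (b) if $A_n\to A$ in $Z_2$ then the corresponding solutions converge in $Z_2$ to the solution for $A$ at every $t\in[0,t_0]$. The null solution is stable if the problem is well posed on $[0,t_0]$ for every $t_0>0$ and for every $\varepsilon>0$ there is $\eta>0$ such that $\|A\|_{Z_2}<\eta$ implies that the solution has $Z_2$-norm $<\varepsilon$ for all $t\ge0$; unstable means not stable. *)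

From Stdlib Require Import Reals.
From Coquelicot Require Import Coquelicot.
Open Scope R_scope.

Record amp := mkAmp {
  aF : R -> R -> R -> R;
  aG : R -> R -> R -> R;
  aH : R -> R -> R -> R;
  aP : R -> R -> R -> R }.

(** Perturbation fields (v_x', v_y', v_z', p') : functions of (t,x,y,z). *)
Record field := mkField {
  vx : R -> R -> R -> R -> R;
  vy : R -> R -> R -> R -> R;
  vz : R -> R -> R -> R -> R;
  pp : R -> R -> R -> R -> R }.

(** Heaviside function (the value at 0 is irrelevant since sin 0 = 0). *)
Definition heaviside (t : R) : R := if Rlt_dec 0 t then 1 else 0.

Definition C1fun (f : R -> R) : Prop :=
  exists df : R -> R, (forall s, is_derive f s (df s)) /\
                      (forall s, continuous df s).

Definition rr (k l m : nat -> R) (i : nat) : R :=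
  sqrt (k i ^ 2 + l i ^ 2 + m i ^ 2).

Definition DeltaZ2 (c0 rho0 : R) (k l m : nat -> R) : R :=
  c0 * rho0 / (k 3%nat * k 4%nat) *
  (rr k l m 1 * (k 2%nat * k 3%nat * k 4%nat + k 3%nat * m 2%nat * m 4%nat
                 + k 4%nat * l 2%nat * l 3%nat)
 + rr k l m 2 * (k 1%nat * k 3%nat * k 4%nat + k 3%nat * m 1%nat * m 4%nat
                 + k 4%nat * l 1%nat * l 3%nat)).

Definition bounded3 (f : R -> R -> R -> R) : Prop :=
  exists M, forall x y z, Rabs (f x y z) <= M.

Definition inZ2 (c0 rho0 : R) (k l m : nat -> R) (A : amp) : Prop :=
  (exists f1 f2 f3 f4 : R -> R,
     C1fun f1 /\ C1fun f2 /\ C1fun f3 /\ C1fun f4 /\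
     let xi := fun i x y z => k i * x + l i * y + m i * z in
     (forall x y z,
        aF A x y z = k 1%nat * f1 (xi 1%nat x y z) + k 2%nat * f2 (xi 2%nat x y z)
                     + l 3%nat / k 3%nat * f3 (xi 3%nat x y z)
                     + m 4%nat / k 4%nat * f4 (xi 4%nat x y z)) /\
     (forall x y z,
        aG A x y z = l 1%nat * f1 (xi 1%nat x y z) + l 2%nat * f2 (xi 2%nat x y z)
                     - f3 (xi 3%nat x y z)) /\
     (forall x y z,
        aH A x y z = m 1%nat * f1 (xi 1%nat x y z) + m 2%nat * f2 (xi 2%nat x y z)
                     - f4 (xi 4%nat x y z)) /\
     (forall x y z,
        aP A x y z = - c0 * rho0 * rr k l m 1 * f1 (xi 1%nat x y z)
                     + c0 * rho0 * rr k l m 2 * f2 (xi 2%nat x y z))) /\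
  bounded3 (aF A) /\ bounded3 (aG A) /\ bounded3 (aH A) /\ bounded3 (aP A).

(** The Z_2 norm  max(sup|F|, sup|G|, sup|H|, sup|P|), computed as the
    supremum (in extended reals, so defined for every amplitude) of all the
    values |F|, |G|, |H|, |P| on R^3. *)
Definition Z2norm (A : amp) : Rbar :=
  Lub_Rbar (fun r => exists x y z,
     r = Rabs (aF A x y z) \/ r = Rabs (aG A x y z) \/
     r = Rabs (aH A x y z) \/ r = Rabs (aP A x y z)).

Definition amp_sub (A B : amp) : amp :=
  mkAmp (fun x y z => aF A x y z - aF B x y z)
        (fun x y z => aG A x y z - aG B x y z)
        (fun x y z => aH A x y z - aH B x y z)
        (fun x y z => aP A x y z - aP B x y z).

Definition slice (v : field) (t : R) : amp :=
  mkAmp (vx v t) (vy v t) (vz v t) (pp v t).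

Definition convZ2 (c0 rho0 : R) (k l m : nat -> R) (Bn : nat -> amp) (B : amp) : Prop :=
  (forall n, inZ2 c0 rho0 k l m (Bn n)) /\ inZ2 c0 rho0 k l m B /\
  forall eps : R, 0 < eps ->
    exists N : nat, forall n : nat, (N <= n)%nat ->
      Rbar_lt (Z2norm (amp_sub (Bn n) B)) (Finite eps).

Definition cont4 (f : R -> R -> R -> R -> R) (t x y z : R) : Prop :=
  continuous (fun q : R * R * R * R => f (fst (fst (fst q))) (snd (fst (fst q)))
                                          (snd (fst q)) (snd q)) (t, x, y, z).

Definition C1_upto (t0 : R) (f ft fx fy fz : R -> R -> R -> R -> R) : Prop :=
  (forall t x y z, t < t0 ->
     is_derive (fun s => f s x y z) t (ft t x y z) /\
     is_derive (fun s => f t s y z) x (fx t x y z) /\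
     is_derive (fun s => f t x s z) y (fy t x y z) /\
     is_derive (fun s => f t x y s) z (fz t x y z) /\
     cont4 f t x y z /\ cont4 ft t x y z /\ cont4 fx t x y z /\
     cont4 fy t x y z /\ cont4 fz t x y z) /\
  (forall x y z, filterlim (fun s => f s x y z) (at_left t0) (locally (f t0 x y z))).

Definition IsSol (U0 c0 rho0 wf : R) (A : amp) (t0 : R) (v : field) : Prop :=
  (forall t x y z, t <= 0 ->
     vx v t x y z = 0 /\ vy v t x y z = 0 /\ vz v t x y z = 0 /\ pp v t x y z = 0) /\
  exists uxt uxx uxy uxz uyt uyx uyy uyz uzt uzx uzy uzz pt px py pz
         : R -> R -> R -> R -> R,
    C1_upto t0 (vx v) uxt uxx uxy uxz /\
    C1_upto t0 (vy v) uyt uyx uyy uyz /\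
    C1_upto t0 (vz v) uzt uzx uzy uzz /\
    C1_upto t0 (pp v) pt px py pz /\
    forall t x y z, t < t0 ->
      uxt t x y z + U0 * uxx t x y z + / rho0 * px t x y z
        = heaviside t * aF A x y z * sin (wf * t) /\
      uyt t x y z + U0 * uyx t x y z + / rho0 * py t x y z
        = heaviside t * aG A x y z * sin (wf * t) /\
      uzt t x y z + U0 * uzx t x y z + / rho0 * pz t x y z
        = heaviside t * aH A x y z * sin (wf * t) /\
      pt t x y z + U0 * px t x y z
        + rho0 * c0 ^ 2 * (uxx t x y z + uyy t x y z + uzz t x y z)
        = heaviside t * aP A x y z * sin (wf * t).

Definition WellPosed (U0 c0 rho0 wf : R) (k l m : nat -> R) (t0 : R) : Prop :=
  (forall A, inZ2 c0 rho0 k l m A ->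
     exists v, IsSol U0 c0 rho0 wf A t0 v /\
       forall w, IsSol U0 c0 rho0 wf A t0 w ->
         forall t x y z, 0 <= t <= t0 ->
           vx w t x y z = vx v t x y z /\ vy w t x y z = vy v t x y z /\
           vz w t x y z = vz v t x y z /\ pp w t x y z = pp v t x y z) /\
  (forall (An : nat -> amp) (A : amp) (vn : nat -> field) (v : field),
     convZ2 c0 rho0 k l m An A ->
     (forall n, IsSol U0 c0 rho0 wf (An n) t0 (vn n)) ->
     IsSol U0 c0 rho0 wf A t0 v ->
     forall t, 0 <= t <= t0 ->
       convZ2 c0 rho0 k l m (fun n => slice (vn n) t) (slice v t)).

Definition GlobalSol (U0 c0 rho0 wf : R) (A : amp) (v : field) : Prop :=
  forall t0, 0 < t0 -> IsSol U0 c0 rho0 wf A t0 v.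

Definition NullStable (U0 c0 rho0 wf : R) (k l m : nat -> R) : Prop :=
  (forall t0, 0 < t0 -> WellPosed U0 c0 rho0 wf k l m t0) /\
  forall eps, 0 < eps -> exists eta, 0 < eta /\
    forall A v, inZ2 c0 rho0 k l m A ->
      Rbar_lt (Z2norm A) (Finite eta) ->
      GlobalSol U0 c0 rho0 wf A v ->
      forall t, 0 <= t -> Rbar_lt (Z2norm (slice v t)) (Finite eps).

From Stdlib Require Import Reals Lra Psatz Classical_Prop FunctionalExtensionality.
From Coquelicot Require Import Coquelicot.
Open Scope R_scope.

(* The problem is linear with constant coefficients, and every amplitude in
   Z_2 is a sum of four plane waves f_i(xi_i): two acoustic waves and two
   vortical ones.  Along each plane wave the system reduces to a transport
   equation in xi_i, solved explicitly by Duhamel's formula; this gives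
   existence.  Uniqueness comes from the energy identity e_t + div F = 0 of
   the homogeneous system, integrated over a box whose faces move inwards at
   the characteristic speeds U0 +- c0 and c0: the energy in the box cannot
   increase, so a solution with zero data vanishes.  Since Delta <> 0 the four
   profiles are recovered from (F, G, H, P) with a bound linear in the Z_2
   norm, and the Duhamel integrals grow at most linearly in t, which gives
   continuous dependence.  Instability: a vortical wave whose profile has wave
   number wf / (U0 k_3) is forced in resonance along its characteristic, so its
   amplitude grows like delta t / 2 however small delta is. *)

(* Coquelicot's generic lemmas need the normed-module instance pinned down;
   these specialisations to [R] make them usable by [apply]. *)

Lemma cont_pair {T U V : UniformSpace} (f : T -> U) (g : T -> V) x :
  continuous f x -> continuous g x -> continuous (fun y => (f y, g y)) x.
Proof.
  intros Hf Hg. apply (continuous_comp_2 f g (fun a b => (a, b))); auto.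
  apply (continuous_ext (fun q => q)); [intros [a b]; reflexivity|apply continuous_id].
Qed.

Lemma cont_fst {T U : UniformSpace} (x : T * U) : continuous fst x.
Proof. destruct x. apply continuous_fst. Qed.

Lemma cont_snd {T U : UniformSpace} (x : T * U) : continuous snd x.
Proof. destruct x. apply continuous_snd. Qed.

Lemma cont_Rplus {T : UniformSpace} (f g : T -> R) x :
  continuous f x -> continuous g x -> continuous (fun y => f y + g y) x.
Proof. intros. apply (continuous_plus (V := R_NormedModule)); auto. Qed.

Lemma cont_Rmult {T : UniformSpace} (f g : T -> R) x :
  continuous f x -> continuous g x -> continuous (fun y => f y * g y) x.
Proof. intros. apply (continuous_mult (K := R_AbsRing)); auto. Qed.

Lemma cont_Ropp {T : UniformSpace} (f : T -> R) x :
  continuous f x -> continuous (fun y => - f y) x.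
Proof. intros. apply (continuous_opp (V := R_NormedModule)); auto. Qed.

Lemma cont_Rminus {T : UniformSpace} (f g : T -> R) x :
  continuous f x -> continuous g x -> continuous (fun y => f y - g y) x.
Proof. intros. apply cont_Rplus; auto. apply cont_Ropp; auto. Qed.

Lemma cont_affine (p q x : R) : continuous (fun s => p + q * s) x.
Proof.
  apply cont_Rplus; [apply continuous_const|].
  apply cont_Rmult; [apply continuous_const|apply continuous_id].
Qed.

Lemma cont_sin_scal (w u : R) : continuous (fun u => sin (w * u)) u.
Proof.
  apply (continuous_comp (fun u => w * u) sin); [|apply continuous_sin].
  apply cont_Rmult; [apply continuous_const|apply continuous_id].
Qed.

Lemma continuous_continuity_pt (f : R -> R) x : continuous f x -> continuity_pt f x.
Proof.
  intro H. apply continuity_pt_locally. intro eps.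
  apply (proj1 (filterlim_locally f (f x)) H eps).
Qed.

Lemma locally_lt (t T : R) : t < T -> locally t (fun y => y < T).
Proof. intro H. apply (open_lt T t H). Qed.

Lemma is_derive_value (f : R -> R) (x a b : R) : is_derive f x a -> a = b -> is_derive f x b.
Proof. intros H ->; exact H. Qed.

Lemma is_derive_Rplus (f g : R -> R) (x a b : R) :
  is_derive f x a -> is_derive g x b -> is_derive (fun s => f s + g s) x (a + b).
Proof. intros. apply (is_derive_plus (V := R_NormedModule)); auto. Qed.

Lemma is_derive_Rminus (f g : R -> R) (x a b : R) :
  is_derive f x a -> is_derive g x b -> is_derive (fun s => f s - g s) x (a - b).
Proof. intros. apply (is_derive_minus (V := R_NormedModule)); auto. Qed.

Lemma is_derive_Rmult (f g : R -> R) (x a b : R) :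
  is_derive f x a -> is_derive g x b ->
  is_derive (fun s => f s * g s) x (a * g x + f x * b).
Proof. intros. apply (is_derive_mult f g); auto. intros; apply Rmult_comm. Qed.

Lemma is_derive_Rscal (f : R -> R) (x k a : R) :
  is_derive f x a -> is_derive (fun s => k * f s) x (k * a).
Proof. intros. apply is_derive_scal; auto. Qed.

Lemma is_derive_Rconst (c x : R) : is_derive (fun _ => c) x 0.
Proof. apply (is_derive_const (V := R_NormedModule)). Qed.

Lemma is_derive_affine (p q x : R) : is_derive (fun s => p + q * s) x q.
Proof. apply (is_derive_value _ x (0 + q * 1)); [auto_derive; auto; ring | ring]. Qed.

Lemma continuous_of_is_derive (f df : R -> R) :
  (forall s, is_derive f s (df s)) -> forall s, continuous f s.
Proof.
  intros Hf s. apply (ex_derive_continuous (K := R_AbsRing) (V := R_NormedModule)).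
  exists (df s). apply Hf.
Qed.

Lemma RInt_Rplus (f g : R -> R) a b :
  ex_RInt f a b -> ex_RInt g a b -> RInt (fun z => f z + g z) a b = RInt f a b + RInt g a b.
Proof. intros. apply (RInt_plus (V := R_CompleteNormedModule)); auto. Qed.

Lemma RInt_Ropp (f : R -> R) a b :
  ex_RInt f a b -> RInt (fun z => - f z) a b = - RInt f a b.
Proof. intros. apply (RInt_opp (V := R_CompleteNormedModule)); auto. Qed.

Lemma RInt_Rscal (f : R -> R) k a b :
  ex_RInt f a b -> RInt (fun z => k * f z) a b = k * RInt f a b.
Proof. intros. apply (RInt_scal (V := R_CompleteNormedModule)); auto. Qed.

Lemma RInt_Rminus (f g : R -> R) a b :
  ex_RInt f a b -> ex_RInt g a b -> RInt (fun z => f z - g z) a b = RInt f a b - RInt g a b.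
Proof. intros. apply (RInt_minus (V := R_CompleteNormedModule)); auto. Qed.

Lemma RInt_zero (f : R -> R) a b : (forall z, f z = 0) -> RInt f a b = 0.
Proof.
  intros H. rewrite (RInt_ext f (fun _ => 0)) by auto. rewrite RInt_const. apply Rmult_0_r.
Qed.

Lemma ex_RInt_cont (f : R -> R) a b : (forall z, continuous f z) -> ex_RInt f a b.
Proof. intros H. apply (ex_RInt_continuous (V := R_CompleteNormedModule)). intros; apply H. Qed.

Lemma RInt_FTC (F f : R -> R) a b :
  (forall z, is_derive F z (f z)) -> (forall z, continuous f z) ->
  @eq R (RInt f a b) (F b - F a).
Proof.
  intros Hd Hc. apply is_RInt_unique. apply (is_RInt_derive (V := R_CompleteNormedModule)); auto.
Qed.

Lemma RInt_ge_scal (f g : R -> R) k a b :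
  a <= b -> ex_RInt f a b -> ex_RInt g a b ->
  (forall z, a <= z <= b -> k * g z <= f z) -> k * RInt g a b <= RInt f a b.
Proof.
  intros Hab Hf Hg H. rewrite <- RInt_Rscal by auto. apply RInt_le; auto.
  - apply (ex_RInt_scal (V := R_NormedModule)); auto.
  - intros; apply H; lra.
Qed.

Lemma RInt_le_scal (f g : R -> R) k a b :
  a <= b -> ex_RInt f a b -> ex_RInt g a b ->
  (forall z, a <= z <= b -> f z <= k * g z) -> RInt f a b <= k * RInt g a b.
Proof.
  intros Hab Hf Hg H. rewrite <- RInt_Rscal by auto. apply RInt_le; auto.
  - apply (ex_RInt_scal (V := R_NormedModule)); auto.
  - intros; apply H; lra.
Qed.

Lemma RInt_nonneg (f : R -> R) a b :
  a <= b -> ex_RInt f a b -> (forall z, a <= z <= b -> 0 <= f z) -> 0 <= RInt f a b.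
Proof.
  intros Hab Hf H. rewrite <- (Rmult_0_l (RInt (fun _ => 1) a b)).
  apply RInt_ge_scal; auto. apply ex_RInt_const. intros; rewrite Rmult_0_l; auto.
Qed.

Lemma RInt_nonpos (f : R -> R) a b :
  a <= b -> ex_RInt f a b -> (forall z, a <= z <= b -> f z <= 0) -> RInt f a b <= 0.
Proof.
  intros Hab Hf H. rewrite <- (Rmult_0_l (RInt (fun _ => 1) a b)).
  apply RInt_le_scal; auto. apply ex_RInt_const. intros; rewrite Rmult_0_l; auto.
Qed.

Lemma abs_RInt_le_const_unordered (f : R -> R) u v M :
  ex_RInt f u v -> (forall y, Rmin u v <= y <= Rmax u v -> Rabs (f y) <= M) ->
  Rabs (RInt f u v) <= Rabs (v - u) * M.
Proof.
  intros He Hb. destruct (Rle_or_lt u v) as [Huv|Huv].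
  - rewrite (Rabs_right (v - u)) by lra. apply abs_RInt_le_const; auto.
    intros t Ht. apply Hb. rewrite Rmin_left, Rmax_right; lra.
  - rewrite <- opp_RInt_swap by (apply ex_RInt_swap; auto).
    change (Rabs (- RInt f v u) <= Rabs (v - u) * M).
    rewrite Rabs_Ropp, (Rabs_left (v - u)), Ropp_minus_distr by lra.
    apply abs_RInt_le_const; [lra|apply ex_RInt_swap; auto|].
    intros t Ht. apply Hb. rewrite Rmin_right, Rmax_left; lra.
Qed.

Lemma RInt_nonpos_nonneg_zero (f : R -> R) a b m :
  a < m < b -> (forall z, continuous f z) -> (forall z, a <= z <= b -> 0 <= f z) ->
  RInt f a b <= 0 -> f m = 0.
Proof.
  intros Hm Hc Hp HI.
  destruct (Rle_lt_or_eq_dec 0 (f m)) as [Hlt|Heq]; [apply Hp; lra| |auto]. exfalso.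
  assert (he : 0 < f m / 2) by lra.
  destruct (proj1 (filterlim_locally f (f m)) (Hc m) (mkposreal _ he)) as [d Hd].
  set (r := Rmin d (Rmin (m - a) (b - m)) / 2).
  assert (Hr : 0 < r /\ r < d /\ r < m - a /\ r < b - m).
  { pose proof (cond_pos d). pose proof (Rmin_l d (Rmin (m - a) (b - m))).
    pose proof (Rmin_r d (Rmin (m - a) (b - m))).
    pose proof (Rmin_l (m - a) (b - m)). pose proof (Rmin_r (m - a) (b - m)).
    assert (0 < Rmin d (Rmin (m - a) (b - m))) by (repeat apply Rmin_pos; lra).
    unfold r; lra. }
  assert (Hex : forall u v, ex_RInt f u v) by (intros; apply ex_RInt_cont; auto).
  rewrite <- (RInt_Chasles f a (m - r) b), <- (RInt_Chasles f (m - r) (m + r) b) in HI by auto.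
  change (RInt f a (m - r) + (RInt f (m - r) (m + r) + RInt f (m + r) b) <= 0) in HI.
  assert (0 <= RInt f a (m - r)) by (apply RInt_nonneg; auto; [lra|intros; apply Hp; lra]).
  assert (0 <= RInt f (m + r) b) by (apply RInt_nonneg; auto; [lra|intros; apply Hp; lra]).
  assert (Hmid : f m / 2 * RInt (fun _ => 1) (m - r) (m + r) <= RInt f (m - r) (m + r)).
  { apply RInt_ge_scal; auto; [lra|apply ex_RInt_const|].
    intros z Hz. assert (Hb : ball m d z) by (change (Rabs (z - m) < d); apply Rabs_def1; lra).
    specialize (Hd z Hb). change (Rabs (f z - f m) < f m / 2) in Hd.
    apply Rabs_def2 in Hd. lra. }
  rewrite RInt_const in Hmid. change (scal (m + r - (m - r)) 1) with ((m + r - (m - r)) * 1) in Hmid.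
  assert (0 < f m / 2 * ((m + r - (m - r)) * 1)) by (apply Rmult_lt_0_compat; lra).
  lra.
Qed.

Lemma Rabs_le_bounds a b : Rabs a <= b -> - b <= a <= b.
Proof. intro H. pose proof (Rle_abs a). pose proof (Rle_abs (- a)). rewrite Rabs_Ropp in *. lra. Qed.

(** * Integrals depending on a parameter *)

Section ParametricIntegral.
Context {T : UniformSpace}.
Implicit Types (g : T -> R -> R) (p : T).

Lemma continuous_uncurried_ball g p0 y0 :
  continuous (fun q : T * R => g (fst q) (snd q)) (p0, y0) ->
  forall eps : posreal, exists d : posreal, forall p y,
    ball p0 d p -> Rabs (y - y0) < d -> Rabs (g p y - g p0 y0) < eps.
Proof.
  intros Hc eps.
  destruct (Hc (ball (g p0 y0) eps) (locally_ball _ _)) as [d Hd].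
  exists d. intros p y Hp Hy. apply (Hd (p, y)). split; auto.
Qed.

Lemma continuous_uncurried_section g p y :
  continuous (fun q : T * R => g (fst q) (snd q)) (p, y) -> continuous (g p) y.
Proof.
  intro H. apply (continuous_comp_2 (fun _ : R => p) (fun y => y) g y); auto.
  - apply continuous_const.
  - apply continuous_id.
Qed.

Definition uniformly_close_on g p0 (eps : R) (lo hi : R) : Prop :=
  locally p0 (fun p => forall y, lo <= y <= hi -> Rabs (g p y - g p0 y) < eps).

Lemma uniformly_close_on_extend g p0 (eps : posreal) lo s :
  continuous (fun q : T * R => g (fst q) (snd q)) (p0, s) ->
  exists d : posreal, forall u, s - d < u ->
    uniformly_close_on g p0 eps lo u -> uniformly_close_on g p0 eps lo (s + d / 2).
Proof.
  intros Hc.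
  assert (he : 0 < eps / 2) by (destruct eps; simpl; lra).
  destruct (continuous_uncurried_ball g p0 s Hc (mkposreal _ he)) as [d Hd]. simpl in Hd.
  exists d. intros u Hu HQ. unfold uniformly_close_on in *.
  generalize (filter_and _ _ HQ (locally_ball p0 d)). apply filter_imp.
  intros p [Hp Hball] y Hy.
  destruct (Rle_or_lt y u) as [Hyu|Hyu]; [apply Hp; lra|].
  assert (Hys : Rabs (y - s) < d) by (apply Rabs_def1; destruct d; simpl in *; lra).
  pose proof (Hd p y Hball Hys) as A1.
  pose proof (Hd p0 y (ball_center p0 d) Hys) as A2.
  replace (g p y - g p0 y) with ((g p y - g p0 s) - (g p0 y - g p0 s)) by ring.
  eapply Rle_lt_trans; [apply Rabs_triang|]. rewrite Rabs_Ropp.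
  destruct eps; simpl in *; lra.
Qed.

(* A supremum argument on the right end point replaces compactness of [lo, hi]. *)
Lemma tube_lemma g p0 (lo hi : R) :
  (forall y, lo <= y <= hi -> continuous (fun q : T * R => g (fst q) (snd q)) (p0, y)) ->
  forall eps : posreal, uniformly_close_on g p0 eps lo hi.
Proof.
  intros Hc eps.
  destruct (Rle_or_lt lo hi) as [Hlh|Hlh]; cycle 1.
  { exists (mkposreal 1 Rlt_0_1). intros p _ y Hy. lra. }
  assert (Hmono : forall u v, v <= u ->
    uniformly_close_on g p0 eps lo u -> uniformly_close_on g p0 eps lo v).
  { intros u v Hvu. unfold uniformly_close_on. apply filter_imp. intros p Hp y Hy. apply Hp. lra. }
  set (E := fun u => lo <= u <= hi /\ uniformly_close_on g p0 eps lo u).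
  assert (Elo : E lo).
  { split; [lra|]. unfold uniformly_close_on.
    destruct (continuous_uncurried_ball g p0 lo (Hc lo (conj (Rle_refl _) Hlh)) eps) as [d Hd].
    exists d. intros p Hp y Hy. replace y with lo by lra. apply Hd; auto.
    rewrite Rminus_diag, Rabs_R0. apply cond_pos. }
  assert (Eb : bound E) by (exists hi; intros u [Hu _]; lra).
  destruct (completeness E Eb (ex_intro _ lo Elo)) as [s [Hs1 Hs2]].
  assert (Hs : lo <= s <= hi) by (split; [apply Hs1, Elo|apply Hs2; intros u [Hu _]; lra]).
  destruct (uniformly_close_on_extend g p0 eps lo s (Hc s Hs)) as [d Hd].
  assert (Hex : exists u, E u /\ s - d < u).
  { apply NNPP. intro Hn.
    assert (s <= s - d).
    { apply Hs2. intros u Hu. apply Rnot_lt_le. intro Hlt. apply Hn. exists u. auto. }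
    destruct d; simpl in *; lra. }
  destruct Hex as [u [[_ Hu] Hsu]].
  pose proof (Hd u Hsu Hu) as HQ.
  destruct (Rle_or_lt hi (s + d / 2)) as [Hh|Hh]; [apply Hmono with (s + d / 2); auto|].
  exfalso. pose proof (cond_pos d).
  assert (s + d / 2 <= s) by (apply Hs1; split; [lra|auto]). lra.
Qed.

Lemma ex_RInt_uncurried_section g p u v :
  (forall y, continuous (fun q : T * R => g (fst q) (snd q)) (p, y)) -> ex_RInt (g p) u v.
Proof.
  intros H. apply ex_RInt_cont. intro z. apply continuous_uncurried_section, H.
Qed.

End ParametricIntegral.

Lemma abs_RInt_diff_le (f g : R -> R) a b a' b' Ma Mb D :
  (forall u v, ex_RInt f u v) -> (forall u v, ex_RInt g u v) ->
  (forall y, Rmin a' a <= y <= Rmax a' a -> Rabs (f y) <= Ma) ->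
  (forall y, Rmin b b' <= y <= Rmax b b' -> Rabs (f y) <= Mb) ->
  (forall y, Rmin a b <= y <= Rmax a b -> Rabs (f y - g y) <= D) ->
  Rabs (RInt f a' b' - RInt g a b) <= Rabs (a - a') * Ma + Rabs (b - a) * D + Rabs (b' - b) * Mb.
Proof.
  intros Hf Hg Ha Hb HD.
  rewrite <- (RInt_Chasles f a' a b'), <- (RInt_Chasles f a b b') by auto.
  change (Rabs (RInt f a' a + (RInt f a b + RInt f b b') - RInt g a b)
    <= Rabs (a - a') * Ma + Rabs (b - a) * D + Rabs (b' - b) * Mb).
  assert (I1 : Rabs (RInt f a' a) <= Rabs (a - a') * Ma)
    by (apply abs_RInt_le_const_unordered; auto).
  assert (I3 : Rabs (RInt f b b') <= Rabs (b' - b) * Mb)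
    by (apply abs_RInt_le_const_unordered; auto).
  assert (I2 : Rabs (RInt f a b - RInt g a b) <= Rabs (b - a) * D).
  { rewrite <- RInt_Rminus by auto. apply abs_RInt_le_const_unordered; auto.
    apply (ex_RInt_minus (V := R_NormedModule)); auto. }
  replace (RInt f a' a + (RInt f a b + RInt f b b') - RInt g a b)
    with (RInt f a' a + (RInt f a b - RInt g a b) + RInt f b b') by ring.
  pose proof (Rabs_triang (RInt f a' a + (RInt f a b - RInt g a b)) (RInt f b b')).
  pose proof (Rabs_triang (RInt f a' a) (RInt f a b - RInt g a b)).
  lra.
Qed.

Lemma continuous_uncurried_locally_bounded {T : UniformSpace} (g : T -> R -> R) p0 y0 :
  continuous (fun q : T * R => g (fst q) (snd q)) (p0, y0) ->
  exists d : posreal, forall p y, ball p0 d p -> Rabs (y - y0) < d ->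
    Rabs (g p y) <= Rabs (g p0 y0) + 1.
Proof.
  intro Hc. destruct (continuous_uncurried_ball g p0 y0 Hc (mkposreal 1 Rlt_0_1)) as [d Hd].
  exists d. intros p y Hp Hy. specialize (Hd p y Hp Hy). simpl in Hd.
  pose proof (Rabs_triang (g p y - g p0 y0) (g p0 y0)).
  replace (g p y - g p0 y0 + g p0 y0) with (g p y) in * by ring. lra.
Qed.

Lemma Rabs_between_lt u v y d :
  Rmin u v <= y <= Rmax u v -> Rabs (u - v) < d -> Rabs (y - v) < d.
Proof.
  intros Hy Huv. apply Rabs_def2 in Huv. apply Rabs_def1;
    unfold Rmin, Rmax in Hy; destruct (Rle_dec u v); lra.
Qed.

Lemma lt_Rmin_div_le x d e M : 0 < M -> x < Rmin d (e / M) -> x * M <= e.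
Proof.
  intros HM Hx. pose proof (Rmin_r d (e / M)).
  apply Rle_trans with (e / M * M); [apply Rmult_le_compat_r; lra|right; field; lra].
Qed.

Lemma continuous_RInt_param {T : UniformSpace} (g : T -> R -> R) (a b : T -> R) (p0 : T) :
  locally p0 (fun p => forall y, continuous (fun q : T * R => g (fst q) (snd q)) (p, y)) ->
  continuous a p0 -> continuous b p0 ->
  continuous (fun p => RInt (g p) (a p) (b p)) p0.
Proof.
  intros Hg Ha Hb.
  assert (Hg0 : forall y, continuous (fun q : T * R => g (fst q) (snd q)) (p0, y))
    by (apply (locally_singleton _ _ Hg)).
  set (a0 := a p0). set (b0 := b p0).
  destruct (continuous_uncurried_locally_bounded g p0 a0 (Hg0 a0)) as [d1 Hd1].
  destruct (continuous_uncurried_locally_bounded g p0 b0 (Hg0 b0)) as [d2 Hd2].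
  set (Ma := Rabs (g p0 a0) + 1). set (Mb := Rabs (g p0 b0) + 1). set (L := Rabs (b0 - a0) + 1).
  assert (HMa : 0 < Ma) by (unfold Ma; pose proof (Rabs_pos (g p0 a0)); lra).
  assert (HMb : 0 < Mb) by (unfold Mb; pose proof (Rabs_pos (g p0 b0)); lra).
  assert (HL : 0 < L) by (unfold L; pose proof (Rabs_pos (b0 - a0)); lra).
  apply filterlim_locally. intros eps. pose proof (cond_pos eps) as Heps.
  assert (he1 : 0 < Rmin d1 (eps / 3 / Ma))
    by (apply Rmin_pos; [apply cond_pos|apply Rdiv_lt_0_compat; lra]).
  assert (he2 : 0 < Rmin d2 (eps / 3 / Mb))
    by (apply Rmin_pos; [apply cond_pos|apply Rdiv_lt_0_compat; lra]).
  assert (he3 : 0 < eps / (3 * L)) by (apply Rdiv_lt_0_compat; lra).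
  pose proof (Ha _ (locally_ball a0 (mkposreal _ he1))) as Ha'.
  pose proof (Hb _ (locally_ball b0 (mkposreal _ he2))) as Hb'.
  pose proof (tube_lemma g p0 (Rmin a0 b0) (Rmax a0 b0) (fun y _ => Hg0 y) (mkposreal _ he3)) as Ht.
  unfold filtermap in Ha', Hb'. unfold uniformly_close_on in Ht.
  generalize (filter_and _ _ Hg (filter_and _ _ Ha' (filter_and _ _ Hb'
     (filter_and _ _ Ht (filter_and _ _ (locally_ball p0 d1) (locally_ball p0 d2)))))).
  apply filter_imp. intros p [Hgp [Hap [Hbp [Htp [B1 B2]]]]].
  change (Rabs (a p - a0) < Rmin d1 (eps / 3 / Ma)) in Hap.
  change (Rabs (b p - b0) < Rmin d2 (eps / 3 / Mb)) in Hbp.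
  change (Rabs (RInt (g p) (a p) (b p) - RInt (g p0) a0 b0) < eps).
  pose proof (Rmin_l d1 (eps / 3 / Ma)). pose proof (Rmin_l d2 (eps / 3 / Mb)).
  eapply Rle_lt_trans.
  { apply (abs_RInt_diff_le (g p) (g p0) a0 b0 (a p) (b p) Ma Mb (eps / (3 * L)));
      try (intros; apply ex_RInt_uncurried_section; auto).
    - intros y Hy. apply Hd1; auto. apply (Rabs_between_lt (a p)); [auto|lra].
    - intros y Hy. apply Hd2; auto. rewrite Rmin_comm, Rmax_comm in Hy.
      apply (Rabs_between_lt (b p)); [auto|lra].
    - intros y Hy. left. apply Htp. exact Hy. }
  assert (Rabs (a0 - a p) * Ma <= eps / 3)
    by (rewrite Rabs_minus_sym; apply (lt_Rmin_div_le _ d1); auto).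
  assert (Rabs (b p - b0) * Mb <= eps / 3) by (apply (lt_Rmin_div_le _ d2); auto).
  assert (Rabs (b0 - a0) * (eps / (3 * L)) < eps / 3).
  { apply Rlt_le_trans with (L * (eps / (3 * L))).
    - apply Rmult_lt_compat_r; [auto|unfold L; lra].
    - right. field. lra. }
  lra.
Qed.

Definition cont2 (f : R -> R -> R) (x y : R) : Prop :=
  continuous (fun q : R * R => f (fst q) (snd q)) (x, y).

Definition cont3 (h : R -> R -> R -> R) (t x y : R) : Prop :=
  continuous (fun q : R * R * R => h (fst (fst q)) (snd (fst q)) (snd q)) (t, x, y).

Lemma cont2_plus f g t x : cont2 f t x -> cont2 g t x -> cont2 (fun t x => f t x + g t x) t x.
Proof. intros; apply cont_Rplus; auto. Qed.

Lemma cont2_minus f g t x : cont2 f t x -> cont2 g t x -> cont2 (fun t x => f t x - g t x) t x.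
Proof. intros; apply cont_Rminus; auto. Qed.

Lemma cont2_mult f g t x : cont2 f t x -> cont2 g t x -> cont2 (fun t x => f t x * g t x) t x.
Proof. intros; apply cont_Rmult; auto. Qed.

Lemma cont2_const k t x : cont2 (fun _ _ => k) t x.
Proof. apply continuous_const. Qed.

Lemma cont3_plus f g t x y : cont3 f t x y -> cont3 g t x y ->
  cont3 (fun t x y => f t x y + g t x y) t x y.
Proof. intros; apply cont_Rplus; auto. Qed.

Lemma cont3_minus f g t x y : cont3 f t x y -> cont3 g t x y ->
  cont3 (fun t x y => f t x y - g t x y) t x y.
Proof. intros; apply cont_Rminus; auto. Qed.

Lemma cont3_mult f g t x y : cont3 f t x y -> cont3 g t x y ->
  cont3 (fun t x y => f t x y * g t x y) t x y.
Proof. intros; apply cont_Rmult; auto. Qed.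

Lemma cont3_opp f t x y : cont3 f t x y -> cont3 (fun t x y => - f t x y) t x y.
Proof. intros; apply cont_Ropp; auto. Qed.

Lemma cont3_const k t x y : cont3 (fun _ _ _ => k) t x y.
Proof. apply continuous_const. Qed.

Lemma cont4_plus f g t x y z : cont4 f t x y z -> cont4 g t x y z ->
  cont4 (fun t x y z => f t x y z + g t x y z) t x y z.
Proof. intros; apply cont_Rplus; auto. Qed.

Lemma cont4_minus f g t x y z : cont4 f t x y z -> cont4 g t x y z ->
  cont4 (fun t x y z => f t x y z - g t x y z) t x y z.
Proof. intros; apply cont_Rminus; auto. Qed.

Lemma cont4_mult f g t x y z : cont4 f t x y z -> cont4 g t x y z ->
  cont4 (fun t x y z => f t x y z * g t x y z) t x y z.
Proof. intros; apply cont_Rmult; auto. Qed.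

Lemma cont4_const k t x y z : cont4 (fun _ _ _ _ => k) t x y z.
Proof. apply continuous_const. Qed.

Lemma cont_fst_fst (t x y : R) :
  continuous (fun q : R * R * R => fst (fst q)) (t, x, y).
Proof. apply (continuous_comp fst fst). apply cont_fst. apply cont_fst. Qed.

Lemma cont4_tz f t x y z : cont4 f t x y z -> cont2 (fun t' z' => f t' x y z') t z.
Proof.
  intro H. unfold cont2.
  apply (continuous_comp (fun q : R * R => (fst q, x, y, snd q))
     (fun q : R * R * R * R => f (fst (fst (fst q))) (snd (fst (fst q))) (snd (fst q)) (snd q))).
  - apply cont_pair; [apply cont_pair; [apply cont_pair|]|].
    apply cont_fst. apply continuous_const. apply continuous_const. apply cont_snd.
  - exact H.
Qed.

Lemma cont4_yz f t x y z : cont4 f t x y z -> cont2 (fun y' z' => f t x y' z') y z.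
Proof.
  intro H. unfold cont2.
  apply (continuous_comp (fun q : R * R => (t, x, fst q, snd q))
     (fun q : R * R * R * R => f (fst (fst (fst q))) (snd (fst (fst q))) (snd (fst q)) (snd q))).
  - apply cont_pair; [apply cont_pair; [apply cont_pair|]|].
    apply continuous_const. apply continuous_const. apply cont_fst. apply cont_snd.
  - exact H.
Qed.

Lemma cont4_xz f t x y z : cont4 f t x y z -> cont2 (fun x' z' => f t x' y z') x z.
Proof.
  intro H. unfold cont2.
  apply (continuous_comp (fun q : R * R => (t, fst q, y, snd q))
     (fun q : R * R * R * R => f (fst (fst (fst q))) (snd (fst (fst q))) (snd (fst q)) (snd q))).
  - apply cont_pair; [apply cont_pair; [apply cont_pair|]|].
    apply continuous_const. apply cont_fst. apply continuous_const. apply cont_snd.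
  - exact H.
Qed.

Lemma cont3_ty h t x y : cont3 h t x y -> cont2 (fun t' y' => h t' x y') t y.
Proof.
  intro H. unfold cont2.
  apply (continuous_comp (fun q : R * R => (fst q, x, snd q))
     (fun q : R * R * R => h (fst (fst q)) (snd (fst q)) (snd q))).
  - apply cont_pair; [apply cont_pair|]. apply cont_fst. apply continuous_const. apply cont_snd.
  - exact H.
Qed.

Lemma cont3_xy h t x y : cont3 h t x y -> cont2 (fun x' y' => h t x' y') x y.
Proof.
  intro H. unfold cont2.
  apply (continuous_comp (fun q : R * R => (t, fst q, snd q))
     (fun q : R * R * R => h (fst (fst q)) (snd (fst q)) (snd q))).
  - apply cont_pair; [apply cont_pair|]. apply continuous_const. apply cont_fst. apply cont_snd.
  - exact H.
Qed.

Lemma cont4_comp_last f (a : R -> R) t x y :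
  cont4 f t x y (a t) -> continuous a t -> cont3 (fun t x y => f t x y (a t)) t x y.
Proof.
  intros H Ha. unfold cont3.
  apply (continuous_comp (fun q : R * R * R => (q, a (fst (fst q))))
     (fun q : R * R * R * R => f (fst (fst (fst q))) (snd (fst (fst q))) (snd (fst q)) (snd q))).
  - apply cont_pair. apply continuous_id.
    apply (continuous_comp (fun q : R * R * R => fst (fst q)) a). apply cont_fst_fst. exact Ha.
  - exact H.
Qed.

Lemma cont3_comp_last h (a : R -> R) t x :
  cont3 h t x (a t) -> continuous a t -> cont2 (fun t x => h t x (a t)) t x.
Proof.
  intros H Ha. unfold cont2.
  apply (continuous_comp (fun q : R * R => (q, a (fst q)))
     (fun q : R * R * R => h (fst (fst q)) (snd (fst q)) (snd q))).
  - apply cont_pair. apply continuous_id.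
    apply (continuous_comp (fun q : R * R => fst q) a). apply cont_fst. exact Ha.
  - destruct (t, x) eqn:E. injection E; intros; subst. exact H.
Qed.

Lemma cont2_section_r h t x : cont2 h t x -> continuous (h t) x.
Proof. intro H. apply (continuous_uncurried_section h t x). exact H. Qed.

Lemma cont2_section_l h t x : cont2 h t x -> continuous (fun t' => h t' x) t.
Proof.
  intro H. apply (continuous_comp_2 (fun t' => t') (fun _ => x) h t); auto.
  apply continuous_id. apply continuous_const.
Qed.

Lemma cont3_section_y h t x y : cont3 h t x y -> continuous (h t x) y.
Proof. intro H. apply (cont2_section_r (fun x' y' => h t x' y') x y). apply cont3_xy, H. Qed.

Lemma cont3_section_x h t x y : cont3 h t x y -> continuous (fun x => h t x y) x.
Proof. intro H. apply (cont2_section_l (fun x' y' => h t x' y') x y). apply cont3_xy, H. Qed.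

Lemma cont4_section_z f t x y z : cont4 f t x y z -> continuous (f t x y) z.
Proof. intro H. apply (cont2_section_r (fun y' z' => f t x y' z') y z). apply cont4_yz, H. Qed.

Lemma cont4_section_t f t x y z : cont4 f t x y z -> continuous (fun s => f s x y z) t.
Proof. intro H. apply (cont2_section_l (fun t' z' => f t' x y z') t z). apply cont4_tz, H. Qed.

Lemma locally_fst_fst (P : R -> Prop) t x y :
  locally t P -> locally (t, x, y) (fun q : R * R * R => P (fst (fst q))).
Proof. intro H. apply (cont_fst_fst t x y). exact H. Qed.

Lemma locally_fst (P : R -> Prop) t x :
  locally t P -> locally (t, x) (fun q : R * R => P (fst q)).
Proof. intro H. apply (cont_fst (t, x)). exact H. Qed.

Lemma cont3_RInt (f : R -> R -> R -> R -> R) (a b : R -> R) (t0 t x y : R) :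
  t < t0 -> (forall t x y z, t < t0 -> cont4 f t x y z) ->
  continuous a t -> continuous b t ->
  cont3 (fun t x y => RInt (f t x y) (a t) (b t)) t x y.
Proof.
  intros Ht Hf Ha Hb. unfold cont3.
  apply (continuous_RInt_param (fun p : R * R * R => f (fst (fst p)) (snd (fst p)) (snd p))
           (fun p => a (fst (fst p))) (fun p => b (fst (fst p))) (t, x, y)).
  - apply (filter_imp (fun q : R * R * R => fst (fst q) < t0)).
    + intros [[t' x'] y'] H z. simpl in H. apply (Hf t' x' y' z H).
    + apply (locally_fst_fst (fun s => s < t0)). apply locally_lt; auto.
  - apply (continuous_comp (fun q : R * R * R => fst (fst q)) a). apply cont_fst_fst. exact Ha.
  - apply (continuous_comp (fun q : R * R * R => fst (fst q)) b). apply cont_fst_fst. exact Hb.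
Qed.

Lemma cont2_RInt (h : R -> R -> R -> R) (a b : R -> R) (t0 t x : R) :
  t < t0 -> (forall t x y, t < t0 -> cont3 h t x y) ->
  continuous a t -> continuous b t ->
  cont2 (fun t x => RInt (h t x) (a t) (b t)) t x.
Proof.
  intros Ht Hf Ha Hb. unfold cont2.
  apply (continuous_RInt_param (fun p : R * R => h (fst p) (snd p))
           (fun p => a (fst p)) (fun p => b (fst p)) (t, x)).
  - apply (filter_imp (fun q : R * R => fst q < t0)).
    + intros [t' x'] H z. simpl in H. apply (Hf t' x' z H).
    + apply (locally_fst (fun s => s < t0)). apply locally_lt; auto.
  - apply (continuous_comp (fun q : R * R => fst q) a). apply cont_fst. exact Ha.
  - apply (continuous_comp (fun q : R * R => fst q) b). apply cont_fst. exact Hb.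
Qed.

Lemma continuous_RInt_fixed_bounds (h : R -> R -> R) (a b : R) (x : R) :
  (forall x' y, cont2 h x' y) -> continuous (fun x => RInt (h x) a b) x.
Proof.
  intros Hf.
  apply (continuous_RInt_param h (fun _ => a) (fun _ => b) x).
  - apply filter_forall. intros p y. apply Hf.
  - apply continuous_const.
  - apply continuous_const.
Qed.

Lemma continuity_2d_pt_Derive (g dg : R -> R -> R) (T s y : R) :
  s < T ->
  (forall s y, s < T -> is_derive (fun u => g u y) s (dg s y)) ->
  (forall s y, s < T -> cont2 dg s y) ->
  continuity_2d_pt (fun u v => Derive (fun z => g z v) u) s y.
Proof.
  intros Hs Hd Hc. apply continuity_2d_pt_filterlim.
  apply (continuous_ext_loc (fun q : R * R => Derive (fun z => g z (snd q)) (fst q))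
           (fun q : R * R => dg (fst q) (snd q)) (s, y)); [|apply Hc; auto].
  apply (filter_imp (fun q : R * R => fst q < T)); [|apply (locally_fst (fun u => u < T)), locally_lt; auto].
  intros [u v] Hu. symmetry. apply is_derive_unique, Hd; auto.
Qed.

Lemma is_derive_RInt_param (g dg : R -> R -> R) (a b : R -> R) (T t da db : R) :
  t < T ->
  (forall s y, s < T -> is_derive (fun u => g u y) s (dg s y)) ->
  (forall s y, s < T -> cont2 g s y) -> (forall s y, s < T -> cont2 dg s y) ->
  is_derive a t da -> is_derive b t db ->
  is_derive (fun s => RInt (g s) (a s) (b s)) t
    (RInt (dg t) (a t) (b t) - g t (a t) * da + g t (b t) * db).
Proof.
  intros Ht Hd Hcg Hcd Ha Hb.
  assert (Hloc : locally t (fun y => y < T)) by (apply locally_lt; auto).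
  assert (Hex : forall u v, locally t (fun s => ex_RInt (g s) u v)).
  { intros u v. apply (filter_imp (fun y => y < T)); [|exact Hloc].
    intros s Hs. apply ex_RInt_cont. intro z. apply continuous_uncurried_section, Hcg; auto. }
  assert (Hcont2d : forall s y, Rabs (s - t) < T - t -> 
    continuity_2d_pt (fun u v => Derive (fun z => g z v) u) s y).
  { intros s y Hs. apply (continuity_2d_pt_Derive g dg T); auto. apply Rabs_def2 in Hs. lra. }
  assert (Hpos : 0 < T - t) by lra.
  rewrite (RInt_ext (dg t) (fun s => Derive (fun u => g u s) t))
    by (intros x _; symmetry; apply is_derive_unique, Hd; auto).
  unfold Rminus. rewrite Ropp_mult_distr_l.
  apply (is_derive_RInt_param_bound_comp g a b t da db); auto.
  - exists (mkposreal 1 Rlt_0_1). apply Hex.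
  - exists (mkposreal 1 Rlt_0_1). apply Hex.
  - exists (mkposreal 1 Rlt_0_1). apply (filter_imp (fun y => y < T)); [|exact Hloc].
    intros y Hy s _. eexists. apply Hd; auto.
  - intros s _. apply Hcont2d. rewrite Rminus_diag, Rabs_R0. lra.
  - exists (mkposreal _ Hpos). intros u v Hu _. apply Hcont2d, Hu.
  - exists (mkposreal _ Hpos). intros u v Hu _. apply Hcont2d, Hu.
  - apply continuous_continuity_pt, continuous_uncurried_section, Hcg; auto.
  - apply continuous_continuity_pt, continuous_uncurried_section, Hcg; auto.
Qed.

Lemma is_derive_RInt_fixed_bounds (g dg : R -> R -> R) (a b t : R) :
  (forall s y, is_derive (fun u => g u y) s (dg s y)) ->
  (forall s y, cont2 g s y) -> (forall s y, cont2 dg s y) ->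
  is_derive (fun s => RInt (g s) a b) t (RInt (dg t) a b).
Proof.
  intros Hd Hcg Hcd.
  apply (is_derive_value _ _ (RInt (dg t) a b - g t a * 0 + g t b * 0)); [|ring].
  apply (is_derive_RInt_param g dg (fun _ => a) (fun _ => b) (t + 1)); auto; try lra;
    apply is_derive_Rconst.
Qed.

Definition C1on (t0 : R) (f ft fx fy fz : R -> R -> R -> R -> R) : Prop :=
  forall t x y z, t < t0 ->
     is_derive (fun s => f s x y z) t (ft t x y z) /\
     is_derive (fun s => f t s y z) x (fx t x y z) /\
     is_derive (fun s => f t x s z) y (fy t x y z) /\
     is_derive (fun s => f t x y s) z (fz t x y z) /\
     cont4 f t x y z /\ cont4 ft t x y z /\ cont4 fx t x y z /\
     cont4 fy t x y z /\ cont4 fz t x y z.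

Lemma C1on_minus t0 f ft fx fy fz g gt gx gy gz :
  C1on t0 f ft fx fy fz -> C1on t0 g gt gx gy gz ->
  C1on t0 (fun t x y z => f t x y z - g t x y z) (fun t x y z => ft t x y z - gt t x y z)
    (fun t x y z => fx t x y z - gx t x y z) (fun t x y z => fy t x y z - gy t x y z)
    (fun t x y z => fz t x y z - gz t x y z).
Proof.
  intros Hf Hg t x y z Ht.
  destruct (Hf t x y z Ht) as (a1&a2&a3&a4&a5&a6&a7&a8&a9).
  destruct (Hg t x y z Ht) as (b1&b2&b3&b4&b5&b6&b7&b8&b9).
  do 4 (split; [apply is_derive_Rminus; auto|]).
  do 4 (split; [apply cont4_minus; auto|]). apply cont4_minus; auto.
Qed.

Lemma C1on_plus t0 f ft fx fy fz g gt gx gy gz :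
  C1on t0 f ft fx fy fz -> C1on t0 g gt gx gy gz ->
  C1on t0 (fun t x y z => f t x y z + g t x y z) (fun t x y z => ft t x y z + gt t x y z)
    (fun t x y z => fx t x y z + gx t x y z) (fun t x y z => fy t x y z + gy t x y z)
    (fun t x y z => fz t x y z + gz t x y z).
Proof.
  intros Hf Hg t x y z Ht.
  destruct (Hf t x y z Ht) as (a1&a2&a3&a4&a5&a6&a7&a8&a9).
  destruct (Hg t x y z Ht) as (b1&b2&b3&b4&b5&b6&b7&b8&b9).
  do 4 (split; [apply is_derive_Rplus; auto|]).
  do 4 (split; [apply cont4_plus; auto|]). apply cont4_plus; auto.
Qed.

Lemma C1on_scal t0 a f ft fx fy fz :
  C1on t0 f ft fx fy fz ->
  C1on t0 (fun t x y z => a * f t x y z) (fun t x y z => a * ft t x y z)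
    (fun t x y z => a * fx t x y z) (fun t x y z => a * fy t x y z)
    (fun t x y z => a * fz t x y z).
Proof.
  intros Hf t x y z Ht.
  destruct (Hf t x y z Ht) as (a1&a2&a3&a4&a5&a6&a7&a8&a9).
  do 4 (split; [apply is_derive_Rscal; auto|]).
  do 4 (split; [apply cont4_mult; auto; apply cont4_const|]).
  apply cont4_mult; auto; apply cont4_const.
Qed.

Lemma C1_upto_of_C1on t0 f ft fx fy fz :
  C1on (t0 + 1) f ft fx fy fz -> C1_upto t0 f ft fx fy fz.
Proof.
  intro H. split.
  - intros t x y z Ht. exact (H t x y z ltac:(lra)).
  - intros x y z. apply (filterlim_filter_le_1 (F := locally t0)); [apply filter_le_within|].
    destruct (H t0 x y z ltac:(lra)) as (_&_&_&_&Hf&_). apply cont4_section_t, Hf.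
Qed.

(** * Uniqueness: energy decay in a shrinking box *)

Ltac cont4_auto := repeat match goal with
  | |- cont4 (fun t x y z => @?f t x y z + @?g t x y z) _ _ _ _ => apply (cont4_plus f g)
  | |- cont4 (fun t x y z => @?f t x y z - @?g t x y z) _ _ _ _ => apply (cont4_minus f g)
  | |- cont4 (fun t x y z => @?f t x y z * @?g t x y z) _ _ _ _ => apply (cont4_mult f g)
  | |- cont4 (fun _ _ _ _ => ?k) _ _ _ _ => apply (cont4_const k)
  | H : cont4 ?f ?a ?b ?c ?d |- cont4 (fun t x y z => ?f t x y z) ?a ?b ?c ?d => exact H
  | H : cont4 ?f ?a ?b ?c ?d |- cont4 ?f ?a ?b ?c ?d => exact H
  end.

Ltac derive_auto :=
  eapply is_derive_value; [repeat match goal with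
  | |- is_derive (fun s => @?f s + @?g s) _ _ => apply (is_derive_Rplus f g)
  | |- is_derive (fun s => @?f s - @?g s) _ _ => apply (is_derive_Rminus f g)
  | |- is_derive (fun s => @?f s * @?g s) _ _ => apply (is_derive_Rmult f g)
  | |- is_derive (fun _ => ?k) _ _ => apply (is_derive_Rconst k)
  | H : is_derive ?f ?x _ |- is_derive ?f ?x _ => exact H
  end | ].

Section EnergyEstimate.
Variables U0 c rho t0 : R.
Hypothesis Hc : 0 < c.
Hypothesis Hrho : 0 < rho.
Variables W1 W1t W1x W1y W1z W2 W2t W2x W2y W2z W3 W3t W3x W3y W3z P Pt Px Py Pz
  : R -> R -> R -> R -> R.
Hypothesis C1W1 : C1on t0 W1 W1t W1x W1y W1z.
Hypothesis C1W2 : C1on t0 W2 W2t W2x W2y W2z.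
Hypothesis C1W3 : C1on t0 W3 W3t W3x W3y W3z.
Hypothesis C1P : C1on t0 P Pt Px Py Pz.
Hypothesis zero_before_0 : forall t x y z, t <= 0 ->
  W1 t x y z = 0 /\ W2 t x y z = 0 /\ W3 t x y z = 0 /\ P t x y z = 0.
Hypothesis homogeneous_system : forall t x y z, t < t0 ->
  W1t t x y z + U0 * W1x t x y z + / rho * Px t x y z = 0 /\
  W2t t x y z + U0 * W2x t x y z + / rho * Py t x y z = 0 /\
  W3t t x y z + U0 * W3x t x y z + / rho * Pz t x y z = 0 /\
  Pt t x y z + U0 * Px t x y z + rho * c ^ 2 * (W1x t x y z + W2y t x y z + W3z t x y z) = 0.

Definition kappa := rho * c ^ 2.

Lemma kappa_pos : 0 < kappa.
Proof. unfold kappa. apply Rmult_lt_0_compat; auto. apply pow_lt; auto. Qed.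

Definition energy t x y z :=
  rho / 2 * (W1 t x y z * W1 t x y z + W2 t x y z * W2 t x y z + W3 t x y z * W3 t x y z)
  + / (2 * kappa) * (P t x y z * P t x y z).
Definition energy_t t x y z :=
  rho * (W1 t x y z * W1t t x y z + W2 t x y z * W2t t x y z + W3 t x y z * W3t t x y z)
  + / kappa * (P t x y z * Pt t x y z).
Definition energy_x t x y z :=
  rho * (W1 t x y z * W1x t x y z + W2 t x y z * W2x t x y z + W3 t x y z * W3x t x y z)
  + / kappa * (P t x y z * Px t x y z).

Definition flux_x t x y z := U0 * energy t x y z + P t x y z * W1 t x y z.
Definition flux_y t x y z := P t x y z * W2 t x y z.
Definition flux_z t x y z := P t x y z * W3 t x y z.
Definition flux_x_x t x y z :=
  U0 * energy_x t x y z + (Px t x y z * W1 t x y z + P t x y z * W1x t x y z).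
Definition flux_y_y t x y z := Py t x y z * W2 t x y z + P t x y z * W2y t x y z.
Definition flux_z_z t x y z := Pz t x y z * W3 t x y z + P t x y z * W3z t x y z.

Ltac C1_facts t x y z Ht :=
  destruct (C1W1 t x y z Ht) as (?&?&?&?&?&?&?&?&?);
  destruct (C1W2 t x y z Ht) as (?&?&?&?&?&?&?&?&?);
  destruct (C1W3 t x y z Ht) as (?&?&?&?&?&?&?&?&?);
  destruct (C1P t x y z Ht) as (?&?&?&?&?&?&?&?&?).

Lemma energy_conservation t x y z : t < t0 ->
  energy_t t x y z + flux_x_x t x y z + flux_y_y t x y z + flux_z_z t x y z = 0.
Proof.
  intro Ht. destruct (homogeneous_system t x y z Ht) as (E1&E2&E3&E4).
  pose proof kappa_pos.
  unfold energy_t, flux_x_x, energy_x, flux_y_y, flux_z_z.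
  replace (W1t t x y z) with (- U0 * W1x t x y z - / rho * Px t x y z) by lra.
  replace (W2t t x y z) with (- U0 * W2x t x y z - / rho * Py t x y z) by lra.
  replace (W3t t x y z) with (- U0 * W3x t x y z - / rho * Pz t x y z) by lra.
  replace (Pt t x y z) with (- U0 * Px t x y z - kappa * (W1x t x y z + W2y t x y z + W3z t x y z))
    by (unfold kappa; lra).
  field. split; lra.
Qed.

Lemma energy_nonneg t x y z : 0 <= energy t x y z.
Proof.
  pose proof kappa_pos. unfold energy.
  assert (0 < / (2 * kappa)) by (apply Rinv_0_lt_compat; lra).
  nra.
Qed.

(* AM-GM with weights [rho c] and [1 / (rho c)]: the speed of sound [c]
   bounds the acoustic part of the flux by the energy density. *)
Lemma abs_pressure_velocity_le (w a b p : R) : 0 <= a -> 0 <= b ->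
  Rabs (p * w) <= c * (rho / 2 * (w * w + a + b) + / (2 * kappa) * (p * p)).
Proof.
  intros Ha Hb. pose proof kappa_pos.
  replace (c * (rho / 2 * (w * w + a + b) + / (2 * kappa) * (p * p)))
    with ((rho * c * w) ^ 2 / (2 * rho * c) + p ^ 2 / (2 * rho * c) + c * rho / 2 * (a + b))
    by (unfold kappa; field; lra).
  assert (Hrc : 0 < 2 * rho * c) by nra.
  assert (0 <= c * rho / 2 * (a + b)) by nra.
  assert (Rabs (p * w) * (2 * rho * c) <= (rho * c * w) ^ 2 + p ^ 2).
  { pose proof (pow2_ge_0 (rho * c * w + p)). pose proof (pow2_ge_0 (rho * c * w - p)).
    destruct (Rcase_abs (p * w)) as [Hn|Hn];
      [rewrite Rabs_left by auto | rewrite Rabs_right by auto]; nra. }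
  unfold Rdiv. rewrite <- Rmult_plus_distr_r.
  apply Rle_trans with (Rabs (p * w) * (2 * rho * c) * / (2 * rho * c) + 0); [right; field; lra|].
  apply Rplus_le_compat; [apply Rmult_le_compat_r; [left; apply Rinv_0_lt_compat|]|]; lra.
Qed.

Lemma abs_acoustic_flux_x_le t x y z : Rabs (P t x y z * W1 t x y z) <= c * energy t x y z.
Proof. unfold energy. apply abs_pressure_velocity_le; nra. Qed.

Lemma abs_flux_y_le t x y z : Rabs (flux_y t x y z) <= c * energy t x y z.
Proof.
  unfold flux_y, energy.
  replace (W1 t x y z * W1 t x y z + W2 t x y z * W2 t x y z + W3 t x y z * W3 t x y z)
   with (W2 t x y z * W2 t x y z + W1 t x y z * W1 t x y z + W3 t x y z * W3 t x y z) by ring.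
  apply abs_pressure_velocity_le; nra.
Qed.

Lemma abs_flux_z_le t x y z : Rabs (flux_z t x y z) <= c * energy t x y z.
Proof.
  unfold flux_z, energy.
  replace (W1 t x y z * W1 t x y z + W2 t x y z * W2 t x y z + W3 t x y z * W3 t x y z)
   with (W3 t x y z * W3 t x y z + W1 t x y z * W1 t x y z + W2 t x y z * W2 t x y z) by ring.
  apply abs_pressure_velocity_le; nra.
Qed.

Lemma cont_energy t x y z : t < t0 -> cont4 energy t x y z.
Proof. intro Ht. C1_facts t x y z Ht. unfold energy. cont4_auto. Qed.

Lemma cont_energy_t t x y z : t < t0 -> cont4 energy_t t x y z.
Proof. intro Ht. C1_facts t x y z Ht. unfold energy_t. cont4_auto. Qed.

Lemma cont_flux_x t x y z : t < t0 -> cont4 flux_x t x y z.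
Proof. intro Ht. C1_facts t x y z Ht. unfold flux_x, energy. cont4_auto. Qed.

Lemma cont_flux_y t x y z : t < t0 -> cont4 flux_y t x y z.
Proof. intro Ht. C1_facts t x y z Ht. unfold flux_y. cont4_auto. Qed.

Lemma cont_flux_z t x y z : t < t0 -> cont4 flux_z t x y z.
Proof. intro Ht. C1_facts t x y z Ht. unfold flux_z. cont4_auto. Qed.

Lemma cont_flux_x_x t x y z : t < t0 -> cont4 flux_x_x t x y z.
Proof. intro Ht. C1_facts t x y z Ht. unfold flux_x_x, energy_x. cont4_auto. Qed.

Lemma cont_flux_y_y t x y z : t < t0 -> cont4 flux_y_y t x y z.
Proof. intro Ht. C1_facts t x y z Ht. unfold flux_y_y. cont4_auto. Qed.

Lemma cont_flux_z_z t x y z : t < t0 -> cont4 flux_z_z t x y z.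
Proof. intro Ht. C1_facts t x y z Ht. unfold flux_z_z. cont4_auto. Qed.

Lemma is_derive_energy_t t x y z : t < t0 ->
  is_derive (fun s => energy s x y z) t (energy_t t x y z).
Proof.
  intro Ht. pose proof kappa_pos. C1_facts t x y z Ht.
  unfold energy, energy_t. derive_auto. field; lra.
Qed.

Lemma is_derive_flux_x t x y z : t < t0 ->
  is_derive (fun s => flux_x t s y z) x (flux_x_x t x y z).
Proof.
  intro Ht. pose proof kappa_pos. C1_facts t x y z Ht.
  unfold flux_x, flux_x_x, energy, energy_x. derive_auto. field; lra.
Qed.

Lemma is_derive_flux_y t x y z : t < t0 ->
  is_derive (fun s => flux_y t x s z) y (flux_y_y t x y z).
Proof. intro Ht. C1_facts t x y z Ht. unfold flux_y, flux_y_y. derive_auto. ring. Qed.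

Lemma is_derive_flux_z t x y z : t < t0 ->
  is_derive (fun s => flux_z t x y s) z (flux_z_z t x y z).
Proof. intro Ht. C1_facts t x y z Ht. unfold flux_z, flux_z_z. derive_auto. ring. Qed.

(* The box below has faces moving inwards at the characteristic speeds
   [U0 + c], [U0 - c] (in x) and [c] (in y and z): no energy can enter it. *)
Section Box.
Variables Rb X Y Z : R.

Definition x_lo t := (X - Rb) + (U0 + c) * t.
Definition x_hi t := (X + Rb) + (U0 - c) * t.
Definition y_lo t := (Y - Rb) + c * t.
Definition y_hi t := (Y + Rb) + (- c) * t.
Definition z_lo t := (Z - Rb) + c * t.
Definition z_hi t := (Z + Rb) + (- c) * t.

Definition zint (h : R -> R -> R -> R -> R) t x y := RInt (h t x y) (z_lo t) (z_hi t).
Definition yzint (g : R -> R -> R -> R) t x := RInt (g t x) (y_lo t) (y_hi t).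
Definition box_energy t := RInt (yzint (zint energy) t) (x_lo t) (x_hi t).

Definition zint_energy_t t x y :=
  zint energy_t t x y - energy t x y (z_lo t) * c + energy t x y (z_hi t) * (- c).
Definition yzint_energy_t t x :=
  yzint zint_energy_t t x - zint energy t x (y_lo t) * c + zint energy t x (y_hi t) * (- c).
Definition box_energy_t t :=
  RInt (yzint_energy_t t) (x_lo t) (x_hi t) - yzint (zint energy) t (x_lo t) * (U0 + c)
  + yzint (zint energy) t (x_hi t) * (U0 - c).

Definition cont4_below (h : R -> R -> R -> R -> R) := forall t x y z, t < t0 -> cont4 h t x y z.
Definition cont3_below (g : R -> R -> R -> R) := forall t x y, t < t0 -> cont3 g t x y.

Lemma cont3_zint h t x y : cont4_below h -> t < t0 -> cont3 (zint h) t x y.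
Proof. intros Hh Ht. apply (cont3_RInt h z_lo z_hi t0); auto; apply cont_affine. Qed.

Lemma cont2_yzint g t x : cont3_below g -> t < t0 -> cont2 (yzint g) t x.
Proof. intros Hg Ht. apply (cont2_RInt g y_lo y_hi t0); auto; apply cont_affine. Qed.

Lemma ex_RInt_z h t x y u v : cont4_below h -> t < t0 -> ex_RInt (h t x y) u v.
Proof. intros Hh Ht. apply ex_RInt_cont. intro z. apply cont4_section_z, Hh, Ht. Qed.

Lemma ex_RInt_y g t x u v : cont3_below g -> t < t0 -> ex_RInt (g t x) u v.
Proof. intros Hg Ht. apply ex_RInt_cont. intro y. apply cont3_section_y, Hg, Ht. Qed.

Lemma is_derive_zint_x h hx t x y : t < t0 -> cont4_below h -> cont4_below hx ->
  (forall x y z, is_derive (fun s => h t s y z) x (hx t x y z)) ->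
  is_derive (fun s => zint h t s y) x (zint hx t x y).
Proof.
  intros Ht Hh Hhx Hd.
  apply (is_derive_RInt_fixed_bounds (fun s z => h t s y z) (fun s z => hx t s y z));
    intros; auto; apply cont4_xz; auto.
Qed.

Lemma is_derive_zint_y h hy t x y : t < t0 -> cont4_below h -> cont4_below hy ->
  (forall x y z, is_derive (fun s => h t x s z) y (hy t x y z)) ->
  is_derive (fun s => zint h t x s) y (zint hy t x y).
Proof.
  intros Ht Hh Hhy Hd.
  apply (is_derive_RInt_fixed_bounds (fun s z => h t x s z) (fun s z => hy t x s z));
    intros; auto; apply cont4_yz; auto.
Qed.

Lemma is_derive_yzint_x g gx t x : t < t0 -> cont3_below g -> cont3_below gx ->
  (forall x y, is_derive (fun s => g t s y) x (gx t x y)) ->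
  is_derive (fun s => yzint g t s) x (yzint gx t x).
Proof.
  intros Ht Hg Hgx Hd.
  apply (is_derive_RInt_fixed_bounds (fun s y => g t s y) (fun s y => gx t s y));
    intros; auto; apply cont3_xy; auto.
Qed.

Lemma cont_energy_below : cont4_below energy.
Proof. intros ? ? ? ?; apply cont_energy. Qed.

Lemma cont_zint_energy_t t x y : t < t0 -> cont3 zint_energy_t t x y.
Proof.
  intro Ht. unfold zint_energy_t.
  apply cont3_plus; [apply cont3_minus; [|apply cont3_mult; [|apply cont3_const]]|
                     apply cont3_mult; [|apply cont3_const]].
  - apply cont3_zint; auto. intros ? ? ? ?; apply cont_energy_t.
  - apply (cont4_comp_last energy z_lo); [apply cont_energy; auto|apply cont_affine].
  - apply (cont4_comp_last energy z_hi); [apply cont_energy; auto|apply cont_affine].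
Qed.

Lemma cont_yzint_energy_t t x : t < t0 -> cont2 yzint_energy_t t x.
Proof.
  intro Ht. unfold yzint_energy_t.
  apply cont2_plus; [apply cont2_minus; [|apply cont2_mult; [|apply cont2_const]]|
                     apply cont2_mult; [|apply cont2_const]].
  - apply cont2_yzint; auto. intros ? ? ?; apply cont_zint_energy_t.
  - apply (cont3_comp_last (zint energy) y_lo);
      [apply cont3_zint; auto; apply cont_energy_below|apply cont_affine].
  - apply (cont3_comp_last (zint energy) y_hi);
      [apply cont3_zint; auto; apply cont_energy_below|apply cont_affine].
Qed.

Lemma is_derive_zint_energy t x y : t < t0 ->
  is_derive (fun s => zint energy s x y) t (zint_energy_t t x y).
Proof.
  intro Ht. apply (is_derive_RInt_param (fun s z => energy s x y z) (fun s z => energy_t s x y z)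
    z_lo z_hi t0 t c (- c)); auto; try (intros; apply cont4_tz).
  - intros; apply is_derive_energy_t; auto.
  - apply cont_energy; auto.
  - apply cont_energy_t; auto.
  - apply is_derive_affine.
  - apply is_derive_affine.
Qed.

Lemma is_derive_yzint_energy t x : t < t0 ->
  is_derive (fun s => yzint (zint energy) s x) t (yzint_energy_t t x).
Proof.
  intro Ht. apply (is_derive_RInt_param (fun s y => zint energy s x y) (fun s y => zint_energy_t s x y)
    y_lo y_hi t0 t c (- c)); auto; try (intros; apply cont3_ty).
  - intros; apply is_derive_zint_energy; auto.
  - apply cont3_zint; auto. apply cont_energy_below.
  - apply cont_zint_energy_t; auto.
  - apply is_derive_affine.
  - apply is_derive_affine.
Qed.

Lemma is_derive_box_energy t : t < t0 -> is_derive box_energy t (box_energy_t t).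
Proof.
  intro Ht. apply (is_derive_RInt_param (yzint (zint energy)) yzint_energy_t x_lo x_hi t0 t
    (U0 + c) (U0 - c)); auto.
  - intros; apply is_derive_yzint_energy; auto.
  - intros; apply cont2_yzint; auto. intros ? ? ? ?. apply cont3_zint; auto. apply cont_energy_below.
  - intros; apply cont_yzint_energy_t; auto.
  - apply is_derive_affine.
  - apply is_derive_affine.
Qed.

Definition boundary_z t x y :=
  - (c * energy t x y (z_hi t) + flux_z t x y (z_hi t))
  - (c * energy t x y (z_lo t) - flux_z t x y (z_lo t)).
Definition boundary_yz t x :=
  yzint boundary_z t x - (c * zint energy t x (y_hi t) + zint flux_y t x (y_hi t))
  - (c * zint energy t x (y_lo t) - zint flux_y t x (y_lo t)).

Lemma cont_boundary_z t x y : t < t0 -> cont3 boundary_z t x y.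
Proof.
  intro Ht. unfold boundary_z.
  apply cont3_minus; [apply cont3_opp, cont3_plus|apply cont3_minus];
    try (apply cont3_mult; [apply cont3_const|]).
  - apply (cont4_comp_last energy z_hi); [apply cont_energy; auto|apply cont_affine].
  - apply (cont4_comp_last flux_z z_hi); [apply cont_flux_z; auto|apply cont_affine].
  - apply (cont4_comp_last energy z_lo); [apply cont_energy; auto|apply cont_affine].
  - apply (cont4_comp_last flux_z z_lo); [apply cont_flux_z; auto|apply cont_affine].
Qed.

Lemma cont_boundary_yz t x : t < t0 -> continuous (boundary_yz t) x.
Proof.
  intro Ht. unfold boundary_yz.
  assert (HE : forall a, continuous (fun x => c * zint energy t x (a t)) x).
  { intro a. apply (cont_Rmult (fun _ => c)); [apply continuous_const|].
    apply cont3_section_x, cont3_zint; auto. apply cont_energy_below. }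
  assert (HF : forall a, continuous (fun x => zint flux_y t x (a t)) x).
  { intro a. apply cont3_section_x, cont3_zint; auto. intros ? ? ? ?; apply cont_flux_y. }
  apply (cont_Rminus
    (fun x => yzint boundary_z t x - (c * zint energy t x (y_hi t) + zint flux_y t x (y_hi t)))
    (fun x => c * zint energy t x (y_lo t) - zint flux_y t x (y_lo t))).
  - apply (cont_Rminus (yzint boundary_z t)
      (fun x => c * zint energy t x (y_hi t) + zint flux_y t x (y_hi t))).
    + apply (continuous_RInt_fixed_bounds (fun s y => boundary_z t s y)).
      intros; apply cont3_xy, cont_boundary_z; auto.
    + apply (cont_Rplus (fun x => c * zint energy t x (y_hi t)) (fun x => zint flux_y t x (y_hi t)));
        auto.
  - apply (cont_Rminus (fun x => c * zint energy t x (y_lo t)) (fun x => zint flux_y t x (y_lo t)));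
      auto.
Qed.

(* The conservation law integrated by parts in z; the next two lemmas do
   the same in y and in x. *)
Lemma zint_energy_t_eq t x y : t < t0 ->
  zint_energy_t t x y = - zint flux_x_x t x y - zint flux_y_y t x y + boundary_z t x y.
Proof.
  intro Ht. unfold zint_energy_t, zint at 1.
  rewrite (RInt_ext (energy_t t x y) (fun z => (- flux_x_x t x y z - flux_y_y t x y z) - flux_z_z t x y z))
    by (intros z _; pose proof (energy_conservation t x y z Ht); lra).
  assert (Hx : forall u v, ex_RInt (flux_x_x t x y) u v)
    by (intros; apply ex_RInt_z; auto; intros ? ? ? ?; apply cont_flux_x_x).
  assert (Hy : forall u v, ex_RInt (flux_y_y t x y) u v)
    by (intros; apply ex_RInt_z; auto; intros ? ? ? ?; apply cont_flux_y_y).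
  assert (Hz : forall u v, ex_RInt (flux_z_z t x y) u v)
    by (intros; apply ex_RInt_z; auto; intros ? ? ? ?; apply cont_flux_z_z).
  assert (Hox : ex_RInt (fun z => - flux_x_x t x y z) (z_lo t) (z_hi t))
    by (apply (ex_RInt_opp (V := R_NormedModule)); auto).
  assert (Hoxy : ex_RInt (fun z => - flux_x_x t x y z - flux_y_y t x y z) (z_lo t) (z_hi t))
    by (apply (ex_RInt_minus (V := R_NormedModule)); auto).
  rewrite !RInt_Rminus, RInt_Ropp by auto.
  rewrite (RInt_FTC (flux_z t x y) (flux_z_z t x y)).
  - unfold zint, boundary_z. ring.
  - intros; apply is_derive_flux_z; auto.
  - intro z. apply cont4_section_z, cont_flux_z_z; auto.
Qed.

Lemma yzint_energy_t_eq t x : t < t0 ->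
  yzint_energy_t t x = - yzint (zint flux_x_x) t x + boundary_yz t x.
Proof.
  intro Ht. unfold yzint_energy_t, yzint at 1.
  rewrite (RInt_ext (zint_energy_t t x)
    (fun y => (- zint flux_x_x t x y - zint flux_y_y t x y) + boundary_z t x y))
    by (intros y _; apply zint_energy_t_eq; auto).
  assert (Hcx : cont3_below (zint flux_x_x))
    by (intros ? ? ? ?; apply cont3_zint; auto; intros ? ? ? ?; apply cont_flux_x_x).
  assert (Hcy : cont3_below (zint flux_y_y))
    by (intros ? ? ? ?; apply cont3_zint; auto; intros ? ? ? ?; apply cont_flux_y_y).
  assert (Hx : forall u v, ex_RInt (zint flux_x_x t x) u v) by (intros; apply ex_RInt_y; auto).
  assert (Hy : forall u v, ex_RInt (zint flux_y_y t x) u v) by (intros; apply ex_RInt_y; auto).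
  assert (Hb : forall u v, ex_RInt (boundary_z t x) u v)
    by (intros; apply ex_RInt_y; auto; intros ? ? ? ?; apply cont_boundary_z; auto).
  assert (Hox : ex_RInt (fun y => - zint flux_x_x t x y) (y_lo t) (y_hi t))
    by (apply (ex_RInt_opp (V := R_NormedModule)); auto).
  assert (Hoxy : ex_RInt (fun y => - zint flux_x_x t x y - zint flux_y_y t x y) (y_lo t) (y_hi t))
    by (apply (ex_RInt_minus (V := R_NormedModule)); auto).
  rewrite RInt_Rplus, RInt_Rminus, RInt_Ropp by auto.
  rewrite (RInt_FTC (zint flux_y t x) (zint flux_y_y t x)).
  - unfold boundary_yz, yzint. ring.
  - intros; apply is_derive_zint_y; auto.
    + intros ? ? ? ?; apply cont_flux_y.
    + intros ? ? ? ?; apply cont_flux_y_y.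
    + intros; apply is_derive_flux_y; auto.
  - intro y. apply cont3_section_y; auto.
Qed.

Lemma box_energy_t_eq t : t < t0 ->
  box_energy_t t = RInt (boundary_yz t) (x_lo t) (x_hi t)
   + ((U0 - c) * yzint (zint energy) t (x_hi t) - yzint (zint flux_x) t (x_hi t))
   + (yzint (zint flux_x) t (x_lo t) - (U0 + c) * yzint (zint energy) t (x_lo t)).
Proof.
  intro Ht. unfold box_energy_t.
  rewrite (RInt_ext (yzint_energy_t t) (fun x => - yzint (zint flux_x_x) t x + boundary_yz t x))
    by (intros x _; apply yzint_energy_t_eq; auto).
  assert (Hcx : cont3_below (zint flux_x_x))
    by (intros ? ? ? ?; apply cont3_zint; auto; intros ? ? ? ?; apply cont_flux_x_x).
  assert (Hg : forall x, continuous (yzint (zint flux_x_x) t) x)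
    by (intro; apply cont2_section_r, cont2_yzint; auto).
  assert (Hb : forall u v, ex_RInt (boundary_yz t) u v)
    by (intros; apply ex_RInt_cont; intro; apply cont_boundary_yz; auto).
  assert (Ho : ex_RInt (fun x => - yzint (zint flux_x_x) t x) (x_lo t) (x_hi t))
    by (apply (ex_RInt_opp (V := R_NormedModule)), ex_RInt_cont; auto).
  rewrite RInt_Rplus, RInt_Ropp by (auto; apply ex_RInt_cont; auto).
  rewrite (RInt_FTC (yzint (zint flux_x) t) (yzint (zint flux_x_x) t)); auto.
  - ring.
  - intros; apply is_derive_yzint_x; auto.
    + intros ? ? ? ?; apply cont3_zint; auto; intros ? ? ? ?; apply cont_flux_x.
    + intros; apply is_derive_zint_x; auto.
      * intros ? ? ? ?; apply cont_flux_x.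
      * intros ? ? ? ?; apply cont_flux_x_x.
      * intros; apply is_derive_flux_x; auto.
Qed.

Lemma box_energy_t_nonpos t : t < t0 -> 0 <= Rb - c * t -> box_energy_t t <= 0.
Proof.
  intros Ht Hh. rewrite box_energy_t_eq by auto.
  assert (Hy : y_lo t <= y_hi t) by (unfold y_lo, y_hi; lra).
  assert (Hz : z_lo t <= z_hi t) by (unfold z_lo, z_hi; lra).
  assert (ex4 : forall h, cont4_below h -> forall x y, ex_RInt (h t x y) (z_lo t) (z_hi t))
    by (intros; apply ex_RInt_z; auto).
  assert (ex3 : forall h, cont4_below h -> forall x, ex_RInt (zint h t x) (y_lo t) (y_hi t))
    by (intros; apply ex_RInt_y; auto; intros ? ? ? ?; apply cont3_zint; auto).
  assert (Cb : cont3_below boundary_z) by (intros ? ? ? Hs; apply cont_boundary_z, Hs).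
  assert (Ce := cont_energy_below).
  assert (Cx : cont4_below flux_x) by (intros ? ? ? ?; apply cont_flux_x).
  assert (Cy : cont4_below flux_y) by (intros ? ? ? ?; apply cont_flux_y).
  assert (Hboundary : RInt (boundary_yz t) (x_lo t) (x_hi t) <= 0).
  { apply RInt_nonpos; [unfold x_lo, x_hi; lra| |].
    - apply ex_RInt_cont. intro. apply cont_boundary_yz; auto.
    - intros x _. unfold boundary_yz.
      assert (yzint boundary_z t x <= 0).
      { apply RInt_nonpos; auto; [apply ex_RInt_y; auto|]. intros y _. unfold boundary_z.
        pose proof (Rabs_le_bounds _ _ (abs_flux_z_le t x y (z_hi t))).
        pose proof (Rabs_le_bounds _ _ (abs_flux_z_le t x y (z_lo t))). lra. }
      assert (- c * zint energy t x (y_hi t) <= zint flux_y t x (y_hi t)).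
      { apply RInt_ge_scal; auto. intros z _.
        pose proof (Rabs_le_bounds _ _ (abs_flux_y_le t x (y_hi t) z)). lra. }
      assert (zint flux_y t x (y_lo t) <= c * zint energy t x (y_lo t)).
      { apply RInt_le_scal; auto. intros z _.
        pose proof (Rabs_le_bounds _ _ (abs_flux_y_le t x (y_lo t) z)). lra. }
      lra. }
  assert (Hhi : (U0 - c) * yzint (zint energy) t (x_hi t) <= yzint (zint flux_x) t (x_hi t)).
  { apply RInt_ge_scal; auto. intros y _. apply RInt_ge_scal; auto. intros z _.
    pose proof (Rabs_le_bounds _ _ (abs_acoustic_flux_x_le t (x_hi t) y z)). unfold flux_x. lra. }
  assert (Hlo : yzint (zint flux_x) t (x_lo t) <= (U0 + c) * yzint (zint energy) t (x_lo t)).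
  { apply RInt_le_scal; auto. intros y _. apply RInt_le_scal; auto. intros z _.
    pose proof (Rabs_le_bounds _ _ (abs_acoustic_flux_x_le t (x_lo t) y z)). unfold flux_x. lra. }
  lra.
Qed.

Lemma box_energy_at_0 : box_energy 0 = 0.
Proof.
  apply RInt_zero. intro x. apply RInt_zero. intro y. apply RInt_zero. intro z.
  destruct (zero_before_0 0 x y z (Rle_refl 0)) as (A1&A2&A3&A4).
  unfold energy. rewrite A1, A2, A3, A4. ring.
Qed.

Lemma zint_energy_nonneg t x y : t < t0 -> 0 <= Rb - c * t -> 0 <= zint energy t x y.
Proof.
  intros Ht Hh. apply RInt_nonneg; [unfold z_lo, z_hi; lra| |intros; apply energy_nonneg].
  apply ex_RInt_z; auto. apply cont_energy_below.
Qed.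

Lemma yzint_energy_nonneg t x : t < t0 -> 0 <= Rb - c * t -> 0 <= yzint (zint energy) t x.
Proof.
  intros Ht Hh. apply RInt_nonneg; [unfold y_lo, y_hi; lra| |intros; apply zint_energy_nonneg; auto].
  apply ex_RInt_y; auto. intros ? ? ? ?. apply cont3_zint; auto. apply cont_energy_below.
Qed.

Lemma box_energy_nonpos ts : 0 < ts < t0 -> 0 <= Rb - c * ts -> box_energy ts <= 0.
Proof.
  intros Hts Hh.
  destruct (MVT_gen box_energy 0 ts box_energy_t) as [s [Hs Heq]];
    rewrite Rmin_left, Rmax_right in * by lra.
  - intros s Hs. apply is_derive_box_energy. lra.
  - intros s Hs. apply continuous_continuity_pt.
    apply (ex_derive_continuous (K := R_AbsRing) (V := R_NormedModule)).
    exists (box_energy_t s). apply is_derive_box_energy. lra.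
  - assert (box_energy_t s <= 0).
    { apply box_energy_t_nonpos; [lra|]. assert (c * s <= c * ts) by (apply Rmult_le_compat_l; lra). lra. }
    rewrite box_energy_at_0 in Heq. nra.
Qed.

Lemma energy_zero_at_center ts : 0 < ts < t0 -> Rb - c * ts = 1 ->
  energy ts (X + U0 * ts) Y Z = 0.
Proof.
  intros Hts Hh.
  assert (Hyz : yzint (zint energy) ts (X + U0 * ts) = 0).
  { apply (RInt_nonpos_nonneg_zero (yzint (zint energy) ts) (x_lo ts) (x_hi ts)).
    - unfold x_lo, x_hi. lra.
    - intro. apply cont2_section_r, cont2_yzint; [|lra].
      intros ? ? ? ?. apply cont3_zint; auto. apply cont_energy_below.
    - intros; apply yzint_energy_nonneg; lra.
    - apply box_energy_nonpos; lra. }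
  assert (Hz : zint energy ts (X + U0 * ts) Y = 0).
  { apply (RInt_nonpos_nonneg_zero (zint energy ts (X + U0 * ts)) (y_lo ts) (y_hi ts)).
    - unfold y_lo, y_hi. lra.
    - intro. apply cont3_section_y, cont3_zint; [apply cont_energy_below|lra].
    - intros; apply zint_energy_nonneg; lra.
    - unfold yzint in Hyz. lra. }
  apply (RInt_nonpos_nonneg_zero (energy ts (X + U0 * ts) Y) (z_lo ts) (z_hi ts)).
  - unfold z_lo, z_hi. lra.
  - intro. apply cont4_section_z, cont_energy. lra.
  - intros; apply energy_nonneg.
  - unfold zint in Hz. lra.
Qed.

End Box.

Lemma homogeneous_solution_zero t x y z : t < t0 ->
  W1 t x y z = 0 /\ W2 t x y z = 0 /\ W3 t x y z = 0 /\ P t x y z = 0.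
Proof.
  intro Ht. destruct (Rle_or_lt t 0) as [Hle|Hlt]; [apply zero_before_0; auto|].
  pose proof (energy_zero_at_center (c * t + 1) (x - U0 * t) y z t (conj Hlt Ht) ltac:(ring)) as He.
  replace (x - U0 * t + U0 * t) with x in He by ring.
  unfold energy in He. pose proof kappa_pos.
  assert (0 < / (2 * kappa)) by (apply Rinv_0_lt_compat; lra).
  assert (0 <= W1 t x y z * W1 t x y z) by nra. assert (0 <= W2 t x y z * W2 t x y z) by nra.
  assert (0 <= W3 t x y z * W3 t x y z) by nra. assert (0 <= P t x y z * P t x y z) by nra.
  assert (Hsq : W1 t x y z * W1 t x y z + W2 t x y z * W2 t x y z + W3 t x y z * W3 t x y z = 0 /\
               P t x y z * P t x y z = 0) by (split; nra).
  destruct Hsq. repeat split; nra.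
Qed.

End EnergyEstimate.

Lemma left_lim_unique (f g : R -> R) t0 a b :
  filterlim f (at_left t0) (locally a) -> filterlim g (at_left t0) (locally b) ->
  (forall s, s < t0 -> f s = g s) -> a = b.
Proof.
  intros Hf Hg Heq.
  assert (Hg' : filterlim f (at_left t0) (locally b)).
  { apply (filterlim_ext_loc g); [|exact Hg].
    exists (mkposreal 1 Rlt_0_1). intros s _ Hs. symmetry. apply Heq, Hs. }
  apply (filterlim_locally_unique f a b Hf Hg').
Qed.

(* The difference of two solutions solves the homogeneous problem; it
   vanishes for t < t0 by the energy estimate, and at t0 by left continuity. *)
Lemma IsSol_unique U0 c0 rho0 wf A t0 v w :
  0 < c0 -> 0 < rho0 ->
  IsSol U0 c0 rho0 wf A t0 v -> IsSol U0 c0 rho0 wf A t0 w ->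
  forall t x y z, t <= t0 ->
    vx w t x y z = vx v t x y z /\ vy w t x y z = vy v t x y z /\
    vz w t x y z = vz v t x y z /\ pp w t x y z = pp v t x y z.
Proof.
  intros Hc Hr [Zv [vd1 [vd2 [vd3 [vd4 [vd5 [vd6 [vd7 [vd8 [vd9 [vd10 [vd11 [vd12 [vd13 [vd14 [vd15 [vd16
    [Cv1 [Cv2 [Cv3 [Cv4 Ev]]]]]]]]]]]]]]]]]]]]]
    [Zw [wd1 [wd2 [wd3 [wd4 [wd5 [wd6 [wd7 [wd8 [wd9 [wd10 [wd11 [wd12 [wd13 [wd14 [wd15 [wd16
    [Cw1 [Cw2 [Cw3 [Cw4 Ew]]]]]]]]]]]]]]]]]]]]].
  assert (Hdiff : forall t x y z, t < t0 ->
    vx w t x y z - vx v t x y z = 0 /\ vy w t x y z - vy v t x y z = 0 /\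
    vz w t x y z - vz v t x y z = 0 /\ pp w t x y z - pp v t x y z = 0).
  { intros t x y z Ht.
    apply (homogeneous_solution_zero U0 c0 rho0 t0 Hc Hr _ _ _ _ _ _ _ _ _ _ _ _ _ _ _ _ _ _ _ _
      (C1on_minus _ _ _ _ _ _ _ _ _ _ _ (proj1 Cw1) (proj1 Cv1))
      (C1on_minus _ _ _ _ _ _ _ _ _ _ _ (proj1 Cw2) (proj1 Cv2))
      (C1on_minus _ _ _ _ _ _ _ _ _ _ _ (proj1 Cw3) (proj1 Cv3))
      (C1on_minus _ _ _ _ _ _ _ _ _ _ _ (proj1 Cw4) (proj1 Cv4))); auto.
    - intros t' x' y' z' Ht'. destruct (Zv t' x' y' z' Ht') as (e1&e2&e3&e4).
      destruct (Zw t' x' y' z' Ht') as (f1&f2&f3&f4). lra.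
    - intros t' x' y' z' Ht'. destruct (Ev t' x' y' z' Ht') as (e1&e2&e3&e4).
      destruct (Ew t' x' y' z' Ht') as (f1&f2&f3&f4). repeat split; nra. }
  intros t x y z Ht. destruct (Rle_lt_or_eq_dec _ _ Ht) as [Hlt|<-].
  - destruct (Hdiff t x y z Hlt) as (h1&h2&h3&h4). repeat split; lra.
  - repeat split; eapply left_lim_unique;
      [apply (proj2 Cw1) | apply (proj2 Cv1) | intros s Hs; destruct (Hdiff s x y z Hs); lra
      |apply (proj2 Cw2) | apply (proj2 Cv2) | intros s Hs; destruct (Hdiff s x y z Hs) as (?&?&?&?); lra
      |apply (proj2 Cw3) | apply (proj2 Cv3) | intros s Hs; destruct (Hdiff s x y z Hs) as (?&?&?&?); lra
      |apply (proj2 Cw4) | apply (proj2 Cv4) | intros s Hs; destruct (Hdiff s x y z Hs) as (?&?&?&?); lra].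
Qed.

(** * Plane-wave modes *)

Lemma is_derive_comp_Rmax0 (h dh : R -> R) t :
  (forall u, is_derive h u (dh u)) -> dh 0 = 0 ->
  is_derive (fun u => h (Rmax u 0)) t (dh (Rmax t 0)).
Proof.
  intros Hd H0.
  destruct (Rtotal_order t 0) as [Hlt|[Heq|Hgt]].
  - rewrite Rmax_right by lra. rewrite H0.
    apply (is_derive_ext_loc (fun _ => h 0)).
    + destruct (locally_lt t 0 Hlt) as [d Hd']. exists d. intros u Hu.
      rewrite Rmax_right; auto. left. apply Hd'. exact Hu.
    + apply is_derive_Rconst.
  - subst t. rewrite Rmax_right by lra. rewrite H0.
    apply is_derive_Reals. intros eps Heps.
    pose proof (proj1 (is_derive_Reals h 0 (dh 0)) (Hd 0) eps Heps) as [d Hd'].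
    exists d. intros k Hk Hkd. rewrite Rplus_0_l in *. rewrite (Rmax_right 0 0) by lra.
    destruct (Rle_or_lt k 0) as [Hk0|Hk0].
    + rewrite (Rmax_right k 0) by lra.
      replace ((h 0 - h 0) / k - 0) with 0 by (field; lra). rewrite Rabs_R0; auto.
    + rewrite Rmax_left by lra. specialize (Hd' k Hk Hkd). rewrite Rplus_0_l, H0 in Hd'. auto.
  - rewrite Rmax_left by lra.
    apply (is_derive_ext_loc h).
    + assert (Hl : locally t (fun u => 0 < u)).
      { apply (open_gt 0 t Hgt). }
      destruct Hl as [d Hd']. exists d. intros u Hu.
      rewrite Rmax_left; auto. left. apply Hd'. exact Hu.
    + apply Hd.
Qed.

Lemma continuous_Rmax0 t : continuous (fun u => Rmax u 0) t.
Proof.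
  assert (E : forall u : R, (u + Rabs u) / 2 = Rmax u 0).
  { intro u. unfold Rmax. destruct (Rle_dec u 0).
    - rewrite Rabs_left1 by auto. field.
    - rewrite Rabs_right by lra. field. }
  apply (continuous_ext (fun u => (u + Rabs u) / 2)). { intro u; apply E. }
  apply (cont_Rmult (fun u => u + Rabs u) (fun _ => / 2)).
  apply cont_Rplus. apply continuous_id. apply continuous_Rabs. apply continuous_const.
Qed.

Section Mode.
Variables lam w : R.
Variables f df : R -> R.
Hypothesis Hf : forall s, is_derive f s (df s).
Hypothesis Hdf : forall s, continuous df s.

(* Duhamel's formula for the transport equation [u_t + lam u_s = sin (w t) f s]
   with zero data at [t = 0]. *)
Definition duhamel (t s : R) : R := RInt (fun u => f (s - lam * (t - u)) * sin (w * u)) 0 t.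
Definition duhamel_s (t s : R) : R := RInt (fun u => df (s - lam * (t - u)) * sin (w * u)) 0 t.
Definition duhamel_t (t s : R) : R := f s * sin (w * t) - lam * duhamel_s t s.

Lemma cont3_integrand (h : R -> R) t s u : (forall s, continuous h s) ->
  cont3 (fun t s u => h (s - lam * (t - u)) * sin (w * u)) t s u.
Proof.
  intros Hh. unfold cont3. apply cont_Rmult.
  - apply (continuous_comp (fun q : R * R * R => snd (fst q) - lam * (fst (fst q) - snd q)) h);
      [|apply Hh].
    apply cont_Rminus; [apply (continuous_comp fst snd); [apply cont_fst|apply cont_snd]|].
    apply cont_Rmult; [apply continuous_const|apply cont_Rminus; [apply cont_fst_fst|apply cont_snd]].
  - apply (continuous_comp (fun q : R * R * R => snd q) (fun u => sin (w * u)));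
      [apply cont_snd|apply cont_sin_scal].
Qed.

Lemma is_derive_duhamel_t t s : is_derive (fun u => duhamel u s) t (duhamel_t t s).
Proof.
  unfold duhamel, duhamel_t.
  eapply is_derive_value.
  - apply (is_derive_RInt_param (fun t u => f (s - lam * (t - u)) * sin (w * u))
            (fun t u => (- lam) * (df (s - lam * (t - u)) * sin (w * u)))
            (fun _ => 0) (fun t => t) (t + 1) t 0 1); try lra.
    + intros t' u _. eapply is_derive_value.
      apply (is_derive_Rmult (fun t => f (s - lam * (t - u))) (fun _ => sin (w * u))).
      apply (is_derive_comp f (fun t => s - lam * (t - u))). apply Hf.
      apply is_derive_Rminus. apply is_derive_Rconst.
      apply is_derive_Rscal. apply is_derive_Rminus.
      apply (is_derive_id (K := R_AbsRing)). apply is_derive_Rconst.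
      apply is_derive_Rconst. change one with 1. unfold scal; simpl; unfold mult; simpl. ring.
    + intros t' u _. apply (cont3_ty (fun t s u => f (s - lam * (t - u)) * sin (w * u))).
      apply cont3_integrand, (continuous_of_is_derive f df Hf).
    + intros t' u _. unfold cont2.
      apply (cont_Rmult (fun _ => - lam)); [apply continuous_const|].
      apply (cont3_ty (fun t s u => df (s - lam * (t - u)) * sin (w * u))), cont3_integrand, Hdf.
    + apply is_derive_Rconst.
    + apply (is_derive_id (K := R_AbsRing)).
  - rewrite RInt_Rscal.
    2:{ apply ex_RInt_cont. intro z.
        apply (cont3_section_y (fun t s u => df (s - lam * (t - u)) * sin (w * u)) t s z).
        apply cont3_integrand, Hdf. }
    replace (s - lam * (t - t)) with s by ring. unfold duhamel_s. ring.
Qed.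

Lemma is_derive_duhamel_s t s : is_derive (fun u => duhamel t u) s (duhamel_s t s).
Proof.
  unfold duhamel, duhamel_s.
  eapply is_derive_value.
  - apply (is_derive_RInt_param (fun s u => f (s - lam * (t - u)) * sin (w * u))
            (fun s u => df (s - lam * (t - u)) * sin (w * u))
            (fun _ => 0) (fun _ => t) (s + 1) s 0 0); try lra.
    + intros s' u _. eapply is_derive_value.
      apply (is_derive_Rmult (fun s => f (s - lam * (t - u))) (fun _ => sin (w * u))).
      apply (is_derive_comp f (fun s => s - lam * (t - u))). apply Hf.
      apply is_derive_Rminus. apply (is_derive_id (K := R_AbsRing)). apply is_derive_Rconst.
      apply is_derive_Rconst. change one with 1. unfold scal; simpl; unfold mult; simpl. ring.
    + intros s' u _. apply (cont3_xy (fun t s u => f (s - lam * (t - u)) * sin (w * u))).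
      apply cont3_integrand, (continuous_of_is_derive f df Hf).
    + intros s' u _. apply (cont3_xy (fun t s u => df (s - lam * (t - u)) * sin (w * u))).
      apply cont3_integrand, Hdf.
    + apply is_derive_Rconst.
    + apply is_derive_Rconst.
  - rewrite !Rmult_0_r, Rminus_0_r, Rplus_0_r. reflexivity.
Qed.

Lemma cont2_duhamel_gen (h : R -> R) t s : (forall s, continuous h s) ->
  cont2 (fun t s => RInt (fun u => h (s - lam * (t - u)) * sin (w * u)) 0 t) t s.
Proof.
  intros Hh. unfold cont2.
  apply (continuous_RInt_param (fun p : R * R => fun u => h (snd p - lam * (fst p - u)) * sin (w * u))
     (fun _ => 0) (fun p => fst p) (t, s)).
  - apply filter_forall. intros [t' s'] u. apply (cont3_integrand h t' s' u Hh).
  - apply continuous_const.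
  - apply cont_fst.
Qed.


Lemma duhamel_at_0 s : duhamel 0 s = 0.
Proof. unfold duhamel. apply (RInt_point (V := R_CompleteNormedModule)). Qed.
Lemma duhamel_s_at_0 s : duhamel_s 0 s = 0.
Proof. unfold duhamel_s. apply (RInt_point (V := R_CompleteNormedModule)). Qed.
Lemma duhamel_t_at_0 s : duhamel_t 0 s = 0.
Proof. unfold duhamel_t. rewrite duhamel_s_at_0, Rmult_0_r, sin_0. ring. Qed.

Definition mode (t s : R) : R := duhamel (Rmax t 0) s.
Definition mode_t (t s : R) : R := duhamel_t (Rmax t 0) s.
Definition mode_s (t s : R) : R := duhamel_s (Rmax t 0) s.

Lemma mode_nonpos_time t s : t <= 0 -> mode t s = 0.
Proof. intro H. unfold mode. rewrite Rmax_right by auto. apply duhamel_at_0. Qed.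

Lemma is_derive_mode_t t s : is_derive (fun u => mode u s) t (mode_t t s).
Proof.
  unfold mode, mode_t. apply (is_derive_comp_Rmax0 (fun u => duhamel u s) (fun u => duhamel_t u s)).
  intros; apply is_derive_duhamel_t. apply duhamel_t_at_0.
Qed.

Lemma is_derive_mode_s t s : is_derive (fun u => mode t u) s (mode_s t s).
Proof. unfold mode, mode_s. apply is_derive_duhamel_s. Qed.

Lemma mode_transport t s : mode_t t s = heaviside t * sin (w * t) * f s - lam * mode_s t s.
Proof.
  unfold mode_t, mode_s, heaviside. destruct (Rlt_dec 0 t) as [H|H].
  - rewrite Rmax_left by lra. unfold duhamel_t. ring.
  - rewrite Rmax_right by lra. rewrite duhamel_t_at_0, duhamel_s_at_0. ring.
Qed.

Lemma cont2_comp_Rmax0 (h : R -> R -> R) t s : cont2 h (Rmax t 0) s -> cont2 (fun t s => h (Rmax t 0) s) t s.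
Proof.
  intro H. unfold cont2.
  apply (continuous_comp (fun q : R * R => (Rmax (fst q) 0, snd q)) (fun q : R * R => h (fst q) (snd q))).
  - apply cont_pair. apply (continuous_comp fst (fun u => Rmax u 0)). apply cont_fst. apply continuous_Rmax0.
    apply cont_snd.
  - exact H.
Qed.

Lemma cont_duhamel t s : cont2 duhamel t s.
Proof. apply (cont2_duhamel_gen f). apply (continuous_of_is_derive f df Hf). Qed.
Lemma cont_duhamel_s t s : cont2 duhamel_s t s.
Proof. apply (cont2_duhamel_gen df). apply Hdf. Qed.
Lemma cont_duhamel_t t s : cont2 duhamel_t t s.
Proof.
  unfold duhamel_t, cont2.
  apply (cont_Rminus (fun q : R * R => f (snd q) * sin (w * fst q))
                     (fun q => lam * duhamel_s (fst q) (snd q))).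
  - apply cont_Rmult. apply (continuous_comp snd f). apply cont_snd. apply (continuous_of_is_derive f df Hf).
    apply (continuous_comp (fun q : R * R => w * fst q) sin); [|apply continuous_sin].
    apply cont_Rmult. apply continuous_const. apply cont_fst.
  - apply cont_Rmult. apply continuous_const. apply cont_duhamel_s.
Qed.

Lemma cont_mode t s : cont2 mode t s.
Proof. apply (cont2_comp_Rmax0 duhamel). apply cont_duhamel. Qed.
Lemma cont_mode_t t s : cont2 mode_t t s.
Proof. apply (cont2_comp_Rmax0 duhamel_t). apply cont_duhamel_t. Qed.
Lemma cont_mode_s t s : cont2 mode_s t s.
Proof. apply (cont2_comp_Rmax0 duhamel_s). apply cont_duhamel_s. Qed.

End Mode.

Lemma abs_duhamel_diff_le lam w (f g : R -> R) (t s M : R) :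
  (forall s, continuous f s) -> (forall s, continuous g s) ->
  (forall s, Rabs (f s - g s) <= M) ->
  Rabs (duhamel lam w f t s - duhamel lam w g t s) <= Rabs t * M.
Proof.
  intros Hf Hg HM. unfold duhamel.
  assert (Hex : forall h, (forall s, continuous h s) ->
    ex_RInt (fun u => h (s - lam * (t - u)) * sin (w * u)) 0 t).
  { intros h Hh. apply ex_RInt_cont. intro u.
    apply (cont3_section_y (fun t s u => h (s - lam * (t - u)) * sin (w * u)) t s u).
    apply cont3_integrand, Hh. }
  rewrite <- RInt_Rminus by auto.
  replace (Rabs t) with (Rabs (t - 0)) by (rewrite Rminus_0_r; auto).
  apply abs_RInt_le_const_unordered.
  - apply (ex_RInt_minus (V := R_NormedModule)); auto.
  - intros y _. rewrite <- Rmult_minus_distr_r, Rabs_mult.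
    pose proof (HM (s - lam * (t - y))).
    pose proof (Rabs_pos (f (s - lam * (t - y)) - g (s - lam * (t - y)))).
    pose proof (SIN_bound (w * y)).
    assert (Rabs (sin (w * y)) <= 1) by (apply Rabs_le; lra).
    assert (0 <= M) by (pose proof (Rabs_pos (f s - g s)); pose proof (HM s); lra).
    nra.
Qed.

Lemma abs_mode_diff_le lam w (f df g dg : R -> R) (t s M : R) :
  (forall s, is_derive f s (df s)) -> (forall s, is_derive g s (dg s)) ->
  (forall s, Rabs (f s - g s) <= M) ->
  Rabs (mode lam w f t s - mode lam w g t s) <= Rabs t * M.
Proof.
  intros Hf Hg HM. unfold mode.
  eapply Rle_trans. apply abs_duhamel_diff_le; auto.
  - intro; apply (continuous_of_is_derive f df Hf).
  - intro; apply (continuous_of_is_derive g dg Hg).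
  - apply Rmult_le_compat_r.
    + pose proof (Rabs_pos (f 0 - g 0)); pose proof (HM 0); lra.
    + unfold Rmax. destruct (Rle_dec t 0). rewrite Rabs_R0; apply Rabs_pos. right; reflexivity.
Qed.

Lemma is_derive_comp_affine (g dg : R -> R) (p q s : R) :
  (forall v, is_derive g v (dg v)) -> is_derive (fun s => g (p + q * s)) s (q * dg (p + q * s)).
Proof.
  intro Hg. apply (is_derive_comp g (fun s => p + q * s)); [apply Hg|apply is_derive_affine].
Qed.

Lemma cont4_plane_wave (G : R -> R -> R) (kk ll mm t x y z : R) :
  (forall t s, cont2 G t s) -> cont4 (fun t x y z => G t (kk * x + ll * y + mm * z)) t x y z.
Proof.
  intros HG. unfold cont4.
  apply (continuous_comp (fun q : R * R * R * R =>
     (fst (fst (fst q)), kk * snd (fst (fst q)) + ll * snd (fst q) + mm * snd q))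
     (fun q : R * R => G (fst q) (snd q))); [|apply HG].
  assert (Hfst : continuous (fun q : R * R * R * R => fst (fst q)) (t, x, y, z))
    by (apply (continuous_comp fst fst); apply cont_fst).
  apply cont_pair.
  - apply (continuous_comp (fun q : R * R * R * R => fst (fst q)) fst); auto. apply cont_fst.
  - apply cont_Rplus; [apply cont_Rplus|]; apply cont_Rmult; try apply continuous_const.
    + apply (continuous_comp (fun q : R * R * R * R => fst (fst q)) snd); auto. apply cont_snd.
    + apply (continuous_comp fst snd); [apply cont_fst|apply cont_snd].
    + apply cont_snd.
Qed.

Lemma C1on_plane_wave t0 (F Ft Fs : R -> R -> R) (kk ll mm : R) :
  (forall t s, is_derive (fun u => F u s) t (Ft t s)) ->
  (forall t s, is_derive (fun u => F t u) s (Fs t s)) ->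
  (forall t s, cont2 F t s) -> (forall t s, cont2 Ft t s) -> (forall t s, cont2 Fs t s) ->
  C1on t0 (fun t x y z => F t (kk * x + ll * y + mm * z))
          (fun t x y z => Ft t (kk * x + ll * y + mm * z))
          (fun t x y z => kk * Fs t (kk * x + ll * y + mm * z))
          (fun t x y z => ll * Fs t (kk * x + ll * y + mm * z))
          (fun t x y z => mm * Fs t (kk * x + ll * y + mm * z)).
Proof.
  intros Dt Ds CF CFt CFs t x y z _.
  assert (Cs : forall a, cont4 (fun t x y z => a * Fs t (kk * x + ll * y + mm * z)) t x y z)
    by (intro a; apply cont4_mult; [apply cont4_const|apply cont4_plane_wave; auto]).
  assert (Dxi : forall p q s, is_derive (fun s => F t (p + q * s)) s (q * Fs t (p + q * s)))
    by (intros; apply is_derive_comp_affine; auto).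
  split; [apply Dt|]. split; [|split; [|split]].
  - pose proof (Dxi (ll * y + mm * z) kk x) as D.
    replace (ll * y + mm * z + kk * x) with (kk * x + ll * y + mm * z) in D by ring.
    apply (is_derive_ext (fun s => F t (ll * y + mm * z + kk * s))); auto.
    intro; f_equal; ring.
  - pose proof (Dxi (kk * x + mm * z) ll y) as D.
    replace (kk * x + mm * z + ll * y) with (kk * x + ll * y + mm * z) in D by ring.
    apply (is_derive_ext (fun s => F t (kk * x + mm * z + ll * s))); auto.
    intro; f_equal; ring.
  - apply Dxi.
  - split; [apply cont4_plane_wave; auto|]. split; [apply cont4_plane_wave; auto|].
    split; [|split]; apply Cs.
Qed.

(** * The phase space Z_2 *)

Definition xi (k l m : nat -> R) (i : nat) (x y z : R) : R := k i * x + l i * y + m i * z.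

Definition Z2amp (c0 rho0 : R) (k l m : nat -> R) (f1 f2 f3 f4 : R -> R) : amp := mkAmp
  (fun x y z => k 1%nat * f1 (xi k l m 1 x y z) + k 2%nat * f2 (xi k l m 2 x y z)
                + l 3%nat / k 3%nat * f3 (xi k l m 3 x y z) + m 4%nat / k 4%nat * f4 (xi k l m 4 x y z))
  (fun x y z => l 1%nat * f1 (xi k l m 1 x y z) + l 2%nat * f2 (xi k l m 2 x y z) - f3 (xi k l m 3 x y z))
  (fun x y z => m 1%nat * f1 (xi k l m 1 x y z) + m 2%nat * f2 (xi k l m 2 x y z) - f4 (xi k l m 4 x y z))
  (fun x y z => - c0 * rho0 * rr k l m 1 * f1 (xi k l m 1 x y z)
                + c0 * rho0 * rr k l m 2 * f2 (xi k l m 2 x y z)).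

Definition Z2_rep (c0 rho0 : R) (k l m : nat -> R) (A : amp) (f1 f2 f3 f4 : R -> R) : Prop :=
  let B := Z2amp c0 rho0 k l m f1 f2 f3 f4 in
  (forall x y z, aF A x y z = aF B x y z) /\ (forall x y z, aG A x y z = aG B x y z) /\
  (forall x y z, aH A x y z = aH B x y z) /\ (forall x y z, aP A x y z = aP B x y z).

Definition amp_bounded_by (A : amp) (M : R) : Prop :=
  forall x y z, Rabs (aF A x y z) <= M /\ Rabs (aG A x y z) <= M /\
                Rabs (aH A x y z) <= M /\ Rabs (aP A x y z) <= M.

Definition C1_with (f df : R -> R) : Prop :=
  (forall s, is_derive f s (df s)) /\ (forall s, continuous df s).

Lemma inZ2_rep c0 rho0 k l m A : inZ2 c0 rho0 k l m A ->
  exists f1 f2 f3 f4 df1 df2 df3 df4,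
    C1_with f1 df1 /\ C1_with f2 df2 /\ C1_with f3 df3 /\ C1_with f4 df4 /\
    Z2_rep c0 rho0 k l m A f1 f2 f3 f4 /\ exists M, amp_bounded_by A M.
Proof.
  intros [[f1 [f2 [f3 [f4 [[d1 D1] [[d2 D2] [[d3 D3] [[d4 D4] H]]]]]]]]
          [[M1 B1] [[M2 B2] [[M3 B3] [M4 B4]]]]].
  exists f1, f2, f3, f4, d1, d2, d3, d4. do 5 (split; [assumption|]).
  exists (Rmax (Rmax M1 M2) (Rmax M3 M4)). intros x y z.
  pose proof (B1 x y z). pose proof (B2 x y z). pose proof (B3 x y z). pose proof (B4 x y z).
  pose proof (Rmax_l M1 M2). pose proof (Rmax_r M1 M2). pose proof (Rmax_l M3 M4).
  pose proof (Rmax_r M3 M4). pose proof (Rmax_l (Rmax M1 M2) (Rmax M3 M4)).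
  pose proof (Rmax_r (Rmax M1 M2) (Rmax M3 M4)).
  repeat split; lra.
Qed.

Lemma inZ2_of_rep c0 rho0 k l m A f1 f2 f3 f4 df1 df2 df3 df4 M :
  C1_with f1 df1 -> C1_with f2 df2 -> C1_with f3 df3 -> C1_with f4 df4 ->
  Z2_rep c0 rho0 k l m A f1 f2 f3 f4 -> amp_bounded_by A M -> inZ2 c0 rho0 k l m A.
Proof.
  intros H1 H2 H3 H4 HR HM. split.
  - exists f1, f2, f3, f4.
    split; [exists df1; auto|]. split; [exists df2; auto|].
    split; [exists df3; auto|]. split; [exists df4; auto|]. exact HR.
  - split; [|split; [|split]]; exists M; intros x y z; apply HM.
Qed.

Lemma Z2_rep_sub c0 rho0 k l m A B f1 f2 f3 f4 g1 g2 g3 g4 :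
  Z2_rep c0 rho0 k l m A f1 f2 f3 f4 -> Z2_rep c0 rho0 k l m B g1 g2 g3 g4 ->
  Z2_rep c0 rho0 k l m (amp_sub A B) (fun s => f1 s - g1 s) (fun s => f2 s - g2 s)
     (fun s => f3 s - g3 s) (fun s => f4 s - g4 s).
Proof.
  intros (a1&a2&a3&a4) (b1&b2&b3&b4).
  split; [|split; [|split]]; intros x y z; simpl;
    [rewrite a1, b1|rewrite a2, b2|rewrite a3, b3|rewrite a4, b4]; simpl; ring.
Qed.

Lemma Z2norm_lt B eps : Rbar_lt (Z2norm B) (Finite eps) ->
  forall x y z, Rabs (aF B x y z) < eps /\ Rabs (aG B x y z) < eps /\
                Rabs (aH B x y z) < eps /\ Rabs (aP B x y z) < eps.
Proof.
  intros H x y z. unfold Z2norm in H.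
  destruct (Lub_Rbar_correct (fun r => exists x y z,
     r = Rabs (aF B x y z) \/ r = Rabs (aG B x y z) \/
     r = Rabs (aH B x y z) \/ r = Rabs (aP B x y z))) as [Hub _].
  assert (G : forall r, (r = Rabs (aF B x y z) \/ r = Rabs (aG B x y z) \/
     r = Rabs (aH B x y z) \/ r = Rabs (aP B x y z)) -> r < eps)
    by (intros r Hr;
        exact (Rbar_le_lt_trans _ _ _ (Hub r (ex_intro _ x (ex_intro _ y (ex_intro _ z Hr)))) H)).
  repeat split; apply G; auto.
Qed.

Lemma Z2norm_le B M : amp_bounded_by B M -> Rbar_le (Z2norm B) (Finite M).
Proof.
  intros H. unfold Z2norm.
  destruct (Lub_Rbar_correct (fun r => exists x y z,
     r = Rabs (aF B x y z) \/ r = Rabs (aG B x y z) \/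
     r = Rabs (aH B x y z) \/ r = Rabs (aP B x y z))) as [_ Hlub].
  apply Hlub. intros r [x [y [z Hr]]]. simpl. destruct (H x y z) as (A1&A2&A3&A4).
  destruct Hr as [->|[->|[->| ->]]]; auto.
Qed.

Lemma Z2norm_ge_G B x y z : Rbar_le (Finite (Rabs (aG B x y z))) (Z2norm B).
Proof.
  unfold Z2norm.
  destruct (Lub_Rbar_correct (fun r => exists x y z,
     r = Rabs (aF B x y z) \/ r = Rabs (aG B x y z) \/
     r = Rabs (aH B x y z) \/ r = Rabs (aP B x y z))) as [Hub _].
  apply Hub. exists x, y, z. auto.
Qed.

Lemma abs_lincomb4_le a1 a2 a3 a4 d1 d2 d3 d4 D :
  Rabs d1 <= D -> Rabs d2 <= D -> Rabs d3 <= D -> Rabs d4 <= D ->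
  Rabs (a1 * d1 + a2 * d2 + a3 * d3 + a4 * d4) <= (Rabs a1 + Rabs a2 + Rabs a3 + Rabs a4) * D.
Proof.
  intros H1 H2 H3 H4.
  pose proof (Rabs_triang (a1 * d1 + a2 * d2 + a3 * d3) (a4 * d4)).
  pose proof (Rabs_triang (a1 * d1 + a2 * d2) (a3 * d3)).
  pose proof (Rabs_triang (a1 * d1) (a2 * d2)). rewrite !Rabs_mult in *.
  pose proof (Rmult_le_compat_l _ _ _ (Rabs_pos a1) H1).
  pose proof (Rmult_le_compat_l _ _ _ (Rabs_pos a2) H2).
  pose proof (Rmult_le_compat_l _ _ _ (Rabs_pos a3) H3).
  pose proof (Rmult_le_compat_l _ _ _ (Rabs_pos a4) H4).
  lra.
Qed.

(* A crude operator norm of [Z2amp]: the sum of the absolute values of all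
   its coefficients. *)
Definition amp_gain (c0 rho0 : R) (k l m : nat -> R) :=
  (Rabs (k 1%nat) + Rabs (k 2%nat) + Rabs (l 3%nat / k 3%nat) + Rabs (m 4%nat / k 4%nat))
  + (Rabs (l 1%nat) + Rabs (l 2%nat) + Rabs (-1) + Rabs 0)
  + (Rabs (m 1%nat) + Rabs (m 2%nat) + Rabs 0 + Rabs (-1))
  + (Rabs (- c0 * rho0 * rr k l m 1) + Rabs (c0 * rho0 * rr k l m 2) + Rabs 0 + Rabs 0).

Lemma amp_gain_nonneg c0 rho0 k l m : 0 <= amp_gain c0 rho0 k l m.
Proof. unfold amp_gain. repeat apply Rplus_le_le_0_compat; apply Rabs_pos. Qed.

Lemma Z2_rep_bounded c0 rho0 k l m A f1 f2 f3 f4 M :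
  Z2_rep c0 rho0 k l m A f1 f2 f3 f4 ->
  (forall s, Rabs (f1 s) <= M /\ Rabs (f2 s) <= M /\ Rabs (f3 s) <= M /\ Rabs (f4 s) <= M) ->
  amp_bounded_by A (amp_gain c0 rho0 k l m * M).
Proof.
  intros (HF&HG&HH&HP) HM x y z. rewrite HF, HG, HH, HP.
  assert (HM0 : 0 <= M) by (destruct (HM 0) as [H _]; pose proof (Rabs_pos (f1 0)); lra).
  assert (Z0 : Rabs 0 <= M) by (rewrite Rabs_R0; auto).
  assert (P1 : forall s, Rabs (f1 s) <= M) by apply HM.
  assert (P2 : forall s, Rabs (f2 s) <= M) by apply HM.
  assert (P3 : forall s, Rabs (f3 s) <= M) by apply HM.
  assert (P4 : forall s, Rabs (f4 s) <= M) by apply HM.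
  pose proof (Rabs_pos (k 1%nat)). pose proof (Rabs_pos (k 2%nat)).
  pose proof (Rabs_pos (l 3%nat / k 3%nat)). pose proof (Rabs_pos (m 4%nat / k 4%nat)).
  pose proof (Rabs_pos (l 1%nat)). pose proof (Rabs_pos (l 2%nat)).
  pose proof (Rabs_pos (m 1%nat)). pose proof (Rabs_pos (m 2%nat)).
  pose proof (Rabs_pos (- c0 * rho0 * rr k l m 1)). pose proof (Rabs_pos (c0 * rho0 * rr k l m 2)).
  pose proof (Rabs_pos (-1)). pose proof (Rabs_pos 0).
  unfold amp_gain in *. simpl.
  split; [|split; [|split]]; eapply Rle_trans;
    [ apply abs_lincomb4_le; eauto | apply Rmult_le_compat_r; lra
    | replace (_ - _) with (l 1%nat * f1 (xi k l m 1 x y z) + l 2%nat * f2 (xi k l m 2 x y z)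
                            + (-1) * f3 (xi k l m 3 x y z) + 0 * 0) by ring;
      apply abs_lincomb4_le; eauto
    | apply Rmult_le_compat_r; lra
    | replace (_ - _) with (m 1%nat * f1 (xi k l m 1 x y z) + m 2%nat * f2 (xi k l m 2 x y z)
                            + 0 * 0 + (-1) * f4 (xi k l m 4 x y z)) by ring;
      apply abs_lincomb4_le; eauto
    | apply Rmult_le_compat_r; lra
    | match goal with |- Rabs (?a + ?b) <= _ =>
        replace (a + b) with (a + b + 0 * 0 + 0 * 0) by ring end;
      apply abs_lincomb4_le; eauto
    | apply Rmult_le_compat_r; lra ].
Qed.

Section Z2Coefficients.
Variables c0 rho0 : R.
Variables k l m : nat -> R.
Hypothesis Hc : 0 < c0.
Hypothesis Hr : 0 < rho0.
Hypothesis Hk : k 1%nat * k 2%nat * k 3%nat * k 4%nat <> 0.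
Hypothesis HD : DeltaZ2 c0 rho0 k l m <> 0.

Definition alpha1 :=
  k 1%nat * k 3%nat * k 4%nat + k 4%nat * l 1%nat * l 3%nat + k 3%nat * m 1%nat * m 4%nat.
Definition alpha2 :=
  k 2%nat * k 3%nat * k 4%nat + k 4%nat * l 2%nat * l 3%nat + k 3%nat * m 2%nat * m 4%nat.
Definition det12 := alpha1 * rr k l m 2 + alpha2 * rr k l m 1.

Lemma k_neq0 : k 1%nat <> 0 /\ k 2%nat <> 0 /\ k 3%nat <> 0 /\ k 4%nat <> 0.
Proof. repeat split; intro H; apply Hk; rewrite H; ring. Qed.

Lemma det12_neq0 : det12 <> 0.
Proof.
  intro H. apply HD. unfold DeltaZ2.
  replace (_ + _) with det12 by (unfold det12, alpha1, alpha2; ring). rewrite H. ring.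
Qed.

(* [k3 k4 F + k4 l3 G + k3 m4 H] eliminates [f3] and [f4]; together with [P]
   it gives a 2x2 system for [f1], [f2] whose determinant is [det12], a
   multiple of Delta. *)
Lemma Z2_rep_solve_12 B g1 g2 g3 g4 : Z2_rep c0 rho0 k l m B g1 g2 g3 g4 ->
  forall x y z,
  let Q := k 3%nat * k 4%nat * aF B x y z + k 4%nat * l 3%nat * aG B x y z
           + k 3%nat * m 4%nat * aH B x y z in
  det12 * g1 (xi k l m 1 x y z) = rr k l m 2 * Q - alpha2 / (c0 * rho0) * aP B x y z /\
  det12 * g2 (xi k l m 2 x y z) = rr k l m 1 * Q + alpha1 / (c0 * rho0) * aP B x y z.
Proof.
  intros (HF&HG&HH&HP) x y z Q. unfold Q. rewrite HF, HG, HH, HP. simpl.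
  destruct k_neq0 as (_&_&k3n&k4n).
  unfold det12, alpha1, alpha2, xi. split; field; nra.
Qed.

Definition Kq := Rabs (k 3%nat * k 4%nat) + Rabs (k 4%nat * l 3%nat) + Rabs (k 3%nat * m 4%nat).
Definition K1 := (Rabs (rr k l m 2) * Kq + Rabs alpha2 / (c0 * rho0)) / Rabs det12.
Definition K2 := (Rabs (rr k l m 1) * Kq + Rabs alpha1 / (c0 * rho0)) / Rabs det12.
Definition K3 := Rabs (l 1%nat) * K1 + Rabs (l 2%nat) * K2 + 1.
Definition K4 := Rabs (m 1%nat) * K1 + Rabs (m 2%nat) * K2 + 1.
Definition coeff_gain := K1 + K2 + K3 + K4.

Lemma K_nonneg : 0 <= K1 /\ 0 <= K2 /\ 0 <= K3 /\ 0 <= K4.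
Proof.
  assert (0 < c0 * rho0) by nra.
  assert (0 < Rabs det12) by (apply Rabs_pos_lt, det12_neq0).
  assert (0 <= Kq) by (unfold Kq; repeat apply Rplus_le_le_0_compat; apply Rabs_pos).
  assert (Hdiv : forall a b, 0 <= a -> 0 < b -> 0 <= a / b)
    by (intros; apply Rmult_le_pos; [|left; apply Rinv_0_lt_compat]; auto).
  assert (0 <= K1).
  { apply Hdiv; auto. apply Rplus_le_le_0_compat; [apply Rmult_le_pos; auto; apply Rabs_pos|].
    apply Hdiv; auto. apply Rabs_pos. }
  assert (0 <= K2).
  { apply Hdiv; auto. apply Rplus_le_le_0_compat; [apply Rmult_le_pos; auto; apply Rabs_pos|].
    apply Hdiv; auto. apply Rabs_pos. }
  pose proof (Rabs_pos (l 1%nat)). pose proof (Rabs_pos (l 2%nat)).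
  pose proof (Rabs_pos (m 1%nat)). pose proof (Rabs_pos (m 2%nat)).
  unfold K3, K4. repeat split; auto; nra.
Qed.

Lemma abs_lincomb2_minus_le p q a b w A B M :
  Rabs a <= A * M -> Rabs b <= B * M -> Rabs w <= M ->
  Rabs (p * a + q * b - w) <= (Rabs p * A + Rabs q * B + 1) * M.
Proof.
  intros Ha Hb Hw.
  pose proof (Rabs_triang (p * a + q * b) (- w)). pose proof (Rabs_triang (p * a) (q * b)).
  rewrite Rabs_Ropp, !Rabs_mult in *.
  pose proof (Rmult_le_compat_l _ _ _ (Rabs_pos p) Ha).
  pose proof (Rmult_le_compat_l _ _ _ (Rabs_pos q) Hb).
  unfold Rminus. nra.
Qed.

Lemma Z2_rep_coeff_bound_12 B g1 g2 g3 g4 M :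
  Z2_rep c0 rho0 k l m B g1 g2 g3 g4 -> amp_bounded_by B M ->
  forall s, Rabs (g1 s) <= K1 * M /\ Rabs (g2 s) <= K2 * M.
Proof.
  intros HR HM s.
  destruct k_neq0 as (k1n&k2n&_&_).
  assert (Hcc : 0 < c0 * rho0) by nra.
  assert (HDz : 0 < Rabs det12) by (apply Rabs_pos_lt, det12_neq0).
  assert (M0 : 0 <= M) by (destruct (HM 0 0 0) as [H _]; pose proof (Rabs_pos (aF B 0 0 0)); lra).
  assert (Q : forall x y z, Rabs (k 3%nat * k 4%nat * aF B x y z + k 4%nat * l 3%nat * aG B x y z
                                  + k 3%nat * m 4%nat * aH B x y z) <= Kq * M).
  { intros x y z. destruct (HM x y z) as (A1&A2&A3&_).
    pose proof (abs_lincomb4_le (k 3%nat * k 4%nat) (k 4%nat * l 3%nat) (k 3%nat * m 4%nat) 0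
      _ _ _ 0 M A1 A2 A3 ltac:(rewrite Rabs_R0; lra)) as Hq.
    rewrite Rmult_0_l, Rplus_0_r, Rabs_R0, Rplus_0_r in Hq. exact Hq. }
  assert (Hline : forall i, k i <> 0 -> xi k l m i (s / k i) 0 0 = s)
    by (intros; unfold xi; field; auto).
  assert (Hbound : forall r a x y z, Rabs (r * (k 3%nat * k 4%nat * aF B x y z
      + k 4%nat * l 3%nat * aG B x y z + k 3%nat * m 4%nat * aH B x y z) + a * aP B x y z)
      <= (Rabs r * Kq + Rabs a) * M).
  { intros r a x y z. destruct (HM x y z) as (_&_&_&A4).
    pose proof (Rabs_triang (r * (k 3%nat * k 4%nat * aF B x y z + k 4%nat * l 3%nat * aG B x y z
      + k 3%nat * m 4%nat * aH B x y z)) (a * aP B x y z)).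
    rewrite !Rabs_mult in *.
    pose proof (Rmult_le_compat_l _ _ _ (Rabs_pos r) (Q x y z)).
    pose proof (Rmult_le_compat_l _ _ _ (Rabs_pos a) A4). nra. }
  split; apply Rmult_le_reg_l with (Rabs det12); auto; rewrite <- Rabs_mult.
  - destruct (Z2_rep_solve_12 B g1 g2 g3 g4 HR (s / k 1%nat) 0 0) as [I1 _].
    rewrite Hline in I1 by auto. rewrite I1. unfold Rminus. rewrite Ropp_mult_distr_l.
    eapply Rle_trans; [apply Hbound|]. right. unfold K1.
    rewrite Rabs_Ropp, Rabs_div, (Rabs_right (c0 * rho0)) by lra. field. lra.
  - destruct (Z2_rep_solve_12 B g1 g2 g3 g4 HR (s / k 2%nat) 0 0) as [_ I2].
    rewrite Hline in I2 by auto. rewrite I2.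
    eapply Rle_trans; [apply Hbound|]. right. unfold K2.
    rewrite Rabs_div, (Rabs_right (c0 * rho0)) by lra. field. lra.
Qed.

Lemma Z2_rep_coeff_bound B g1 g2 g3 g4 M :
  Z2_rep c0 rho0 k l m B g1 g2 g3 g4 -> amp_bounded_by B M ->
  forall s, Rabs (g1 s) <= coeff_gain * M /\ Rabs (g2 s) <= coeff_gain * M /\
            Rabs (g3 s) <= coeff_gain * M /\ Rabs (g4 s) <= coeff_gain * M.
Proof.
  intros HR HM s.
  destruct k_neq0 as (_&_&k3n&k4n).
  pose proof (Z2_rep_coeff_bound_12 B g1 g2 g3 g4 M HR HM) as B12.
  assert (M0 : 0 <= M) by (destruct (HM 0 0 0) as [H _]; pose proof (Rabs_pos (aF B 0 0 0)); lra).
  assert (Hline : forall i, k i <> 0 -> xi k l m i (s / k i) 0 0 = s)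
    by (intros; unfold xi; field; auto).
  destruct HR as (_&HG&HH&_).
  assert (B3 : Rabs (g3 s) <= K3 * M).
  { destruct (HM (s / k 3%nat) 0 0) as (_&A2&_&_). rewrite HG in A2. simpl in A2.
    rewrite Hline in A2 by auto.
    set (a := g1 (xi k l m 1 (s / k 3%nat) 0 0)) in *. set (b := g2 (xi k l m 2 (s / k 3%nat) 0 0)) in *.
    replace (g3 s) with (l 1%nat * a + l 2%nat * b - (l 1%nat * a + l 2%nat * b - g3 s)) by ring.
    apply abs_lincomb2_minus_le; auto; apply B12. }
  assert (B4 : Rabs (g4 s) <= K4 * M).
  { destruct (HM (s / k 4%nat) 0 0) as (_&_&A3&_). rewrite HH in A3. simpl in A3.
    rewrite Hline in A3 by auto.
    set (a := g1 (xi k l m 1 (s / k 4%nat) 0 0)) in *. set (b := g2 (xi k l m 2 (s / k 4%nat) 0 0)) in *.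
    replace (g4 s) with (m 1%nat * a + m 2%nat * b - (m 1%nat * a + m 2%nat * b - g4 s)) by ring.
    apply abs_lincomb2_minus_le; auto; apply B12. }
  destruct (B12 s) as [B1 B2]. destruct K_nonneg as (?&?&?&?).
  unfold coeff_gain. repeat split; (eapply Rle_trans; [eassumption|]); apply Rmult_le_compat_r; lra.
Qed.

End Z2Coefficients.

(** * The explicit solution *)

Lemma rr_sq k l m i : rr k l m i * rr k l m i = k i * k i + l i * l i + m i * m i.
Proof. unfold rr. rewrite sqrt_sqrt; [ring|nra]. Qed.

(* Each of the four plane waves of Z_2 is transported along its own
   characteristic: the two acoustic waves with speeds [U0 k_i -+ c0 r_i]
   and the two vortical waves with the flow speed [U0 k_i]. *)
Definition speed1 U0 c0 (k l m : nat -> R) := U0 * k 1%nat - c0 * rr k l m 1.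
Definition speed2 U0 c0 (k l m : nat -> R) := U0 * k 2%nat + c0 * rr k l m 2.
Definition speed3 U0 (k : nat -> R) := U0 * k 3%nat.
Definition speed4 U0 (k : nat -> R) := U0 * k 4%nat.

Definition sol_slice U0 c0 rho0 wf k l m (f1 f2 f3 f4 : R -> R) (t : R) : amp :=
  Z2amp c0 rho0 k l m (mode (speed1 U0 c0 k l m) wf f1 t) (mode (speed2 U0 c0 k l m) wf f2 t)
    (mode (speed3 U0 k) wf f3 t) (mode (speed4 U0 k) wf f4 t).

Definition sol U0 c0 rho0 wf k l m (f1 f2 f3 f4 : R -> R) : field :=
  let v t := sol_slice U0 c0 rho0 wf k l m f1 f2 f3 f4 t in
  mkField (fun t => aF (v t)) (fun t => aG (v t)) (fun t => aH (v t)) (fun t => aP (v t)).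

Section Solution.
Variables U0 c0 rho0 wf : R.
Variables k l m : nat -> R.
Variables f1 f2 f3 f4 df1 df2 df3 df4 : R -> R.
Hypothesis D1 : C1_with f1 df1.
Hypothesis D2 : C1_with f2 df2.
Hypothesis D3 : C1_with f3 df3.
Hypothesis D4 : C1_with f4 df4.

Lemma C1on_mode t0 lam f df kk ll mm : C1_with f df ->
  C1on t0 (fun t x y z => mode lam wf f t (kk * x + ll * y + mm * z))
          (fun t x y z => mode_t lam wf f df t (kk * x + ll * y + mm * z))
          (fun t x y z => kk * mode_s lam wf df t (kk * x + ll * y + mm * z))
          (fun t x y z => ll * mode_s lam wf df t (kk * x + ll * y + mm * z))
          (fun t x y z => mm * mode_s lam wf df t (kk * x + ll * y + mm * z)).
Proof.
  intros [Hd Hc]. apply C1on_plane_wave; intros.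
  - eapply is_derive_mode_t; eauto.
  - eapply is_derive_mode_s; eauto.
  - eapply cont_mode; eauto.
  - eapply cont_mode_t; eauto.
  - eapply cont_mode_s; eauto.
Qed.

Lemma sol_IsSol A t0 : 0 < rho0 -> k 3%nat <> 0 -> k 4%nat <> 0 ->
  Z2_rep c0 rho0 k l m A f1 f2 f3 f4 ->
  IsSol U0 c0 rho0 wf A t0 (sol U0 c0 rho0 wf k l m f1 f2 f3 f4).
Proof.
  intros Hr Hk3 Hk4 (HF&HG&HH&HP).
  pose proof (C1on_mode (t0 + 1) (speed1 U0 c0 k l m) f1 df1 (k 1%nat) (l 1%nat) (m 1%nat) D1) as G1.
  pose proof (C1on_mode (t0 + 1) (speed2 U0 c0 k l m) f2 df2 (k 2%nat) (l 2%nat) (m 2%nat) D2) as G2.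
  pose proof (C1on_mode (t0 + 1) (speed3 U0 k) f3 df3 (k 3%nat) (l 3%nat) (m 3%nat) D3) as G3.
  pose proof (C1on_mode (t0 + 1) (speed4 U0 k) f4 df4 (k 4%nat) (l 4%nat) (m 4%nat) D4) as G4.
  split.
  - intros t x y z Ht. simpl. rewrite !mode_nonpos_time by auto. repeat split; ring.
  - do 16 eexists.
    split; [apply C1_upto_of_C1on, (C1on_plus _ _ _ _ _ _ _ _ _ _ _ (C1on_plus _ _ _ _ _ _ _ _ _ _ _
      (C1on_plus _ _ _ _ _ _ _ _ _ _ _ (C1on_scal _ (k 1%nat) _ _ _ _ _ G1)
        (C1on_scal _ (k 2%nat) _ _ _ _ _ G2)) (C1on_scal _ (l 3%nat / k 3%nat) _ _ _ _ _ G3))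
      (C1on_scal _ (m 4%nat / k 4%nat) _ _ _ _ _ G4))|].
    split; [apply C1_upto_of_C1on, (C1on_minus _ _ _ _ _ _ _ _ _ _ _ (C1on_plus _ _ _ _ _ _ _ _ _ _ _
      (C1on_scal _ (l 1%nat) _ _ _ _ _ G1) (C1on_scal _ (l 2%nat) _ _ _ _ _ G2)) G3)|].
    split; [apply C1_upto_of_C1on, (C1on_minus _ _ _ _ _ _ _ _ _ _ _ (C1on_plus _ _ _ _ _ _ _ _ _ _ _
      (C1on_scal _ (m 1%nat) _ _ _ _ _ G1) (C1on_scal _ (m 2%nat) _ _ _ _ _ G2)) G4)|].
    split; [apply C1_upto_of_C1on, (C1on_plus _ _ _ _ _ _ _ _ _ _ _
      (C1on_scal _ (- c0 * rho0 * rr k l m 1) _ _ _ _ _ G1)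
      (C1on_scal _ (c0 * rho0 * rr k l m 2) _ _ _ _ _ G2))|].
    intros t x y z _. cbv beta. rewrite HF, HG, HH, HP. simpl. rewrite !mode_transport.
    unfold xi, speed1, speed2, speed3, speed4.
    set (n1 := mode_s (U0 * k 1%nat - c0 * rr k l m 1) wf df1 t (k 1%nat * x + l 1%nat * y + m 1%nat * z)).
    set (n2 := mode_s (U0 * k 2%nat + c0 * rr k l m 2) wf df2 t (k 2%nat * x + l 2%nat * y + m 2%nat * z)).
    split; [field; lra|]. split; [field; lra|]. split; [field; lra|].
    (* The acoustic waves close the pressure equation because [rr^2 = k^2 + l^2 + m^2]. *)
    match goal with |- ?L = ?R =>
      assert (Hgap : L - R = rho0 * c0 ^ 2 * ((k 1%nat * k 1%nat + l 1%nat * l 1%nat + m 1%nat * m 1%nat)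
                              - rr k l m 1 * rr k l m 1) * n1
                         + rho0 * c0 ^ 2 * ((k 2%nat * k 2%nat + l 2%nat * l 2%nat + m 2%nat * m 2%nat)
                              - rr k l m 2 * rr k l m 2) * n2)
        by (field; lra) end.
    rewrite !rr_sq, !Rminus_diag, !Rmult_0_r, !Rmult_0_l, Rplus_0_r in Hgap. lra.
Qed.

End Solution.

Lemma mode_zero lam w t s : mode lam w (fun _ => 0) t s = 0.
Proof. unfold mode, duhamel. apply RInt_zero. intro; ring. Qed.

Lemma abs_mode_le lam w f df t s M :
  (forall s, is_derive f s (df s)) -> (forall s, Rabs (f s) <= M) ->
  Rabs (mode lam w f t s) <= Rabs t * M.
Proof.
  intros Hd Hb. pose proof (mode_zero lam w t s) as Hz.
  pose proof (abs_mode_diff_le lam w f df (fun _ => 0) (fun _ => 0) t s M Hd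
    (fun s => is_derive_Rconst 0 s)) as H.
  rewrite Hz, Rminus_0_r in H. apply H. intro s'. rewrite Rminus_0_r. auto.
Qed.

Section SolutionBounds.
Variables U0 c0 rho0 wf : R.
Variables k l m : nat -> R.

Lemma sol_slice_inZ2 f1 f2 f3 f4 df1 df2 df3 df4 t M :
  C1_with f1 df1 -> C1_with f2 df2 -> C1_with f3 df3 -> C1_with f4 df4 ->
  (forall s, Rabs (f1 s) <= M /\ Rabs (f2 s) <= M /\ Rabs (f3 s) <= M /\ Rabs (f4 s) <= M) ->
  inZ2 c0 rho0 k l m (slice (sol U0 c0 rho0 wf k l m f1 f2 f3 f4) t).
Proof.
  intros [D1 E1] [D2 E2] [D3 E3] [D4 E4] HM.
  assert (C : forall lam f df, C1_with f df ->
    C1_with (mode lam wf f t) (mode_s lam wf df t)).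
  { intros lam f df [Hd Hc]. split.
    - intro s. eapply is_derive_mode_s; eauto.
    - intro s. eapply cont2_section_r, cont_mode_s; eauto. }
  assert (HR : Z2_rep c0 rho0 k l m (slice (sol U0 c0 rho0 wf k l m f1 f2 f3 f4) t)
    (mode (speed1 U0 c0 k l m) wf f1 t) (mode (speed2 U0 c0 k l m) wf f2 t)
    (mode (speed3 U0 k) wf f3 t) (mode (speed4 U0 k) wf f4 t))
    by (repeat split; intros; reflexivity).
  apply (inZ2_of_rep _ _ _ _ _ _ _ _ _ _ (mode_s (speed1 U0 c0 k l m) wf df1 t)
    (mode_s (speed2 U0 c0 k l m) wf df2 t) (mode_s (speed3 U0 k) wf df3 t)
    (mode_s (speed4 U0 k) wf df4 t) (amp_gain c0 rho0 k l m * (Rabs t * M)) ltac:(apply C; split; auto)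
    ltac:(apply C; split; auto) ltac:(apply C; split; auto) ltac:(apply C; split; auto) HR).
  apply (Z2_rep_bounded _ _ _ _ _ _ _ _ _ _ _ HR). intro s.
  repeat split; eapply abs_mode_le; eauto; intro; apply HM.
Qed.

Lemma sol_slice_diff_bounded f1 f2 f3 f4 df1 df2 df3 df4 g1 g2 g3 g4 dg1 dg2 dg3 dg4 t D :
  (forall s, is_derive f1 s (df1 s)) -> (forall s, is_derive f2 s (df2 s)) ->
  (forall s, is_derive f3 s (df3 s)) -> (forall s, is_derive f4 s (df4 s)) ->
  (forall s, is_derive g1 s (dg1 s)) -> (forall s, is_derive g2 s (dg2 s)) ->
  (forall s, is_derive g3 s (dg3 s)) -> (forall s, is_derive g4 s (dg4 s)) ->
  (forall s, Rabs (f1 s - g1 s) <= D /\ Rabs (f2 s - g2 s) <= D /\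
             Rabs (f3 s - g3 s) <= D /\ Rabs (f4 s - g4 s) <= D) ->
  amp_bounded_by (amp_sub (slice (sol U0 c0 rho0 wf k l m f1 f2 f3 f4) t)
                          (slice (sol U0 c0 rho0 wf k l m g1 g2 g3 g4) t))
                 (amp_gain c0 rho0 k l m * (Rabs t * D)).
Proof.
  intros Df1 Df2 Df3 Df4 Dg1 Dg2 Dg3 Dg4 HD.
  eapply Z2_rep_bounded.
  - apply Z2_rep_sub; repeat split; intros; reflexivity.
  - intro s. repeat split; eapply abs_mode_diff_le; eauto; intro; apply HD.
Qed.

End SolutionBounds.

(** * Well-posedness *)

Section WellPosedness.
Variables U0 c0 rho0 wf : R.
Variables k l m : nat -> R.
Hypothesis Hc : 0 < c0.
Hypothesis Hr : 0 < rho0.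
Hypothesis Hk : k 1%nat * k 2%nat * k 3%nat * k 4%nat <> 0.
Hypothesis HD : DeltaZ2 c0 rho0 k l m <> 0.

Lemma sol_of_rep A t0 f1 f2 f3 f4 df1 df2 df3 df4 :
  C1_with f1 df1 -> C1_with f2 df2 -> C1_with f3 df3 -> C1_with f4 df4 ->
  Z2_rep c0 rho0 k l m A f1 f2 f3 f4 ->
  IsSol U0 c0 rho0 wf A t0 (sol U0 c0 rho0 wf k l m f1 f2 f3 f4).
Proof.
  intros. destruct (k_neq0 k Hk) as (_&_&k3n&k4n). eapply sol_IsSol; eauto.
Qed.

Lemma existence_uniqueness t0 A : inZ2 c0 rho0 k l m A ->
  exists v, IsSol U0 c0 rho0 wf A t0 v /\
    forall w, IsSol U0 c0 rho0 wf A t0 w ->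
      forall t x y z, 0 <= t <= t0 ->
        vx w t x y z = vx v t x y z /\ vy w t x y z = vy v t x y z /\
        vz w t x y z = vz v t x y z /\ pp w t x y z = pp v t x y z.
Proof.
  intros HA.
  destruct (inZ2_rep _ _ _ _ _ A HA) as (f1&f2&f3&f4&df1&df2&df3&df4&D1&D2&D3&D4&HR&_).
  assert (Hs : IsSol U0 c0 rho0 wf A t0 (sol U0 c0 rho0 wf k l m f1 f2 f3 f4))
    by (eapply sol_of_rep; eauto).
  exists (sol U0 c0 rho0 wf k l m f1 f2 f3 f4). split; auto.
  intros w Hw t x y z Ht. apply (IsSol_unique U0 c0 rho0 wf A t0); auto. lra.
Qed.

Lemma slice_eq_sol A t0 f1 f2 f3 f4 df1 df2 df3 df4 w t :
  C1_with f1 df1 -> C1_with f2 df2 -> C1_with f3 df3 -> C1_with f4 df4 ->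
  Z2_rep c0 rho0 k l m A f1 f2 f3 f4 -> IsSol U0 c0 rho0 wf A t0 w -> t <= t0 ->
  slice w t = slice (sol U0 c0 rho0 wf k l m f1 f2 f3 f4) t.
Proof.
  intros D1 D2 D3 D4 HR Hw Ht.
  assert (Hs := sol_of_rep A t0 _ _ _ _ _ _ _ _ D1 D2 D3 D4 HR).
  pose proof (IsSol_unique U0 c0 rho0 wf A t0 _ w Hc Hr Hs Hw t) as E.
  unfold slice. f_equal; repeat (apply functional_extensionality; intro); apply E; auto.
Qed.

Lemma slice_inZ2 A t0 w t :
  inZ2 c0 rho0 k l m A -> IsSol U0 c0 rho0 wf A t0 w -> t <= t0 ->
  inZ2 c0 rho0 k l m (slice w t).
Proof.
  intros HA Hw Ht.
  destruct (inZ2_rep _ _ _ _ _ A HA) as (f1&f2&f3&f4&df1&df2&df3&df4&D1&D2&D3&D4&HR&[M HM]).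
  rewrite (slice_eq_sol A t0 f1 f2 f3 f4 df1 df2 df3 df4 w t) by auto.
  apply (sol_slice_inZ2 U0 c0 rho0 wf k l m f1 f2 f3 f4 df1 df2 df3 df4 t
    (coeff_gain c0 rho0 k l m * M)); auto.
  apply (Z2_rep_coeff_bound c0 rho0 k l m Hc Hr Hk HD A); auto.
Qed.

(* The solution operator is linear and, at time t, bounded by
   [amp_gain * |t| * coeff_gain]. *)
Lemma continuous_dependence t0 An A vn v :
  convZ2 c0 rho0 k l m An A ->
  (forall n, IsSol U0 c0 rho0 wf (An n) t0 (vn n)) -> IsSol U0 c0 rho0 wf A t0 v ->
  forall t, 0 <= t <= t0 -> convZ2 c0 rho0 k l m (fun n => slice (vn n) t) (slice v t).
Proof.
  intros [HAn [HA Hconv]] Hvn Hv t Ht.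
  split; [intro n; apply (slice_inZ2 (An n) t0); auto; lra|].
  split; [apply (slice_inZ2 A t0); auto; lra|].
  intros eps Heps.
  destruct (inZ2_rep _ _ _ _ _ A HA) as (f1&f2&f3&f4&df1&df2&df3&df4&D1&D2&D3&D4&HR&_).
  set (C := amp_gain c0 rho0 k l m * (Rabs t * coeff_gain c0 rho0 k l m)).
  assert (HC : 0 <= C).
  { destruct (K_nonneg c0 rho0 k l m Hc Hr HD) as (?&?&?&?).
    pose proof (amp_gain_nonneg c0 rho0 k l m). pose proof (Rabs_pos t).
    unfold C, coeff_gain. repeat apply Rmult_le_pos; lra. }
  set (d := eps / (2 * (C + 1))).
  assert (Hd : 0 < d) by (apply Rdiv_lt_0_compat; lra).
  destruct (Hconv d Hd) as [N HN]. exists N. intros n Hn.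
  destruct (inZ2_rep _ _ _ _ _ (An n) (HAn n)) as (g1&g2&g3&g4&dg1&dg2&dg3&dg4&G1&G2&G3&G4&HRn&_).
  assert (Hb : forall s, Rabs (g1 s - f1 s) <= coeff_gain c0 rho0 k l m * d /\
                         Rabs (g2 s - f2 s) <= coeff_gain c0 rho0 k l m * d /\
                         Rabs (g3 s - f3 s) <= coeff_gain c0 rho0 k l m * d /\
                         Rabs (g4 s - f4 s) <= coeff_gain c0 rho0 k l m * d).
  { apply (Z2_rep_coeff_bound c0 rho0 k l m Hc Hr Hk HD (amp_sub (An n) A)).
    - apply Z2_rep_sub; auto.
    - intros x y z. destruct (Z2norm_lt _ _ (HN n Hn) x y z) as (a1&a2&a3&a4).
      repeat split; lra. }
  rewrite (slice_eq_sol (An n) t0 g1 g2 g3 g4 dg1 dg2 dg3 dg4 (vn n) t),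
          (slice_eq_sol A t0 f1 f2 f3 f4 df1 df2 df3 df4 v t) by (auto; lra).
  eapply Rbar_le_lt_trans.
  { apply Z2norm_le, (sol_slice_diff_bounded U0 c0 rho0 wf k l m g1 g2 g3 g4 dg1 dg2 dg3 dg4
      f1 f2 f3 f4 df1 df2 df3 df4 t (coeff_gain c0 rho0 k l m * d)); try apply Hb.
    all: match goal with H : C1_with ?f _ |- forall s, is_derive ?f s _ => apply (proj1 H) end. }
  simpl. replace (amp_gain c0 rho0 k l m * (Rabs t * (coeff_gain c0 rho0 k l m * d))) with (C * d)
    by (unfold C; ring).
  unfold d. apply Rmult_lt_reg_r with (2 * (C + 1)); [lra|].
  replace (C * (eps / (2 * (C + 1))) * (2 * (C + 1))) with (C * eps) by (field; lra). nra.
Qed.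

End WellPosedness.

(** * Instability *)

Lemma RInt_sin_sq w t : w <> 0 ->
  @eq R (RInt (fun u => sin (w * u) * sin (w * u)) 0 t) (t / 2 - sin (2 * w * t) / (4 * w)).
Proof.
  intro Hw. rewrite (RInt_FTC (fun u => u / 2 - sin (2 * w * u) / (4 * w))).
  - rewrite Rmult_0_r, sin_0. field; auto.
  - intro u. auto_derive; auto.
    replace (2 * w * u) with (2 * (w * u)) by ring. rewrite cos_2a_sin. field; auto.
  - intro u. apply cont_Rmult; apply cont_sin_scal.
Qed.

(* Along the characteristic [s = lam t], a profile of wave number [w / lam]
   is seen oscillating in phase with the source [sin (w t)]. *)
Lemma mode_resonant lam w delta T : lam <> 0 -> w <> 0 -> 0 <= T ->
  mode lam w (fun s => delta * sin (w / lam * s)) T (lam * T)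
  = delta * (T / 2 - sin (2 * w * T) / (4 * w)).
Proof.
  intros Hlam Hw HT. unfold mode, duhamel. rewrite Rmax_left by lra.
  rewrite (RInt_ext _ (fun u => delta * (sin (w * u) * sin (w * u)))).
  - rewrite RInt_Rscal, RInt_sin_sq; auto.
    apply ex_RInt_cont. intro. apply cont_Rmult; apply cont_sin_scal.
  - intros u _. replace (w / lam * (lam * T - lam * (T - u))) with (w * u) by (field; auto).
    apply Rmult_assoc.
Qed.

Lemma resonant_growth delta w : 0 < delta -> w <> 0 ->
  let T := 2 / delta + 1 / Rabs w + 1 in
  0 <= T /\ 1 <= delta * (T / 2 - sin (2 * w * T) / (4 * w)).
Proof.
  intros Hdel Hw T.
  assert (Hwa : 0 < Rabs w) by (apply Rabs_pos_lt; auto).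
  assert (0 < 2 / delta) by (apply Rdiv_lt_0_compat; lra).
  assert (0 < 1 / Rabs w) by (apply Rdiv_lt_0_compat; lra).
  split; [unfold T; lra|].
  assert (Hsb : Rabs (sin (2 * w * T) / (4 * w)) <= 1 / Rabs w / 4).
  { rewrite Rabs_div, Rabs_mult, (Rabs_right 4) by lra.
    pose proof (SIN_bound (2 * w * T)). assert (Rabs (sin (2 * w * T)) <= 1) by (apply Rabs_le; lra).
    replace (1 / Rabs w / 4) with (1 * / (4 * Rabs w)) by (field; lra).
    apply Rmult_le_compat_r; [left; apply Rinv_0_lt_compat|]; lra. }
  pose proof (Rle_abs (sin (2 * w * T) / (4 * w))).
  assert (T / 2 = 1 / delta + 1 / Rabs w / 2 + 1 / 2) by (unfold T; field; lra).
  replace 1 with (delta * (1 / delta)) at 1 by (field; lra).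
  apply Rmult_le_compat_l; lra.
Qed.

Lemma C1_with_zero : C1_with (fun _ => 0) (fun _ => 0).
Proof. split; intro; [apply is_derive_Rconst|apply continuous_const]. Qed.

Lemma C1_with_sin delta a :
  C1_with (fun s => delta * sin (a * s)) (fun s => delta * (a * cos (a * s))).
Proof.
  split; intro s; [auto_derive; auto; ring|].
  apply cont_Rmult; [apply continuous_const|]. apply cont_Rmult; [apply continuous_const|].
  apply (continuous_comp (fun s => a * s) cos); [|apply continuous_cos].
  apply cont_Rmult; [apply continuous_const|apply continuous_id].
Qed.

Lemma resonant_data_inZ2 c0 rho0 k l m lam w delta : 0 < delta ->
  let A := Z2amp c0 rho0 k l m (fun _ => 0) (fun _ => 0)
             (fun s => delta * sin (w / lam * s)) (fun _ => 0) in
  inZ2 c0 rho0 k l m A /\ amp_bounded_by A (amp_gain c0 rho0 k l m * delta).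
Proof.
  intros Hdel A.
  set (f3 := fun s => delta * sin (w / lam * s)).
  assert (HR : Z2_rep c0 rho0 k l m A (fun _ => 0) (fun _ => 0) f3 (fun _ => 0))
    by (repeat split; intros; reflexivity).
  assert (HAb : amp_bounded_by A (amp_gain c0 rho0 k l m * delta)).
  { apply (Z2_rep_bounded _ _ _ _ _ _ _ _ _ _ _ HR). intro s. unfold f3.
    rewrite Rabs_R0, Rabs_mult, (Rabs_right delta) by lra.
    pose proof (SIN_bound (w / lam * s)). assert (Rabs (sin (w / lam * s)) <= 1) by (apply Rabs_le; lra).
    repeat split; nra. }
  split; [|exact HAb].
  apply (inZ2_of_rep _ _ _ _ _ _ _ _ _ _ _ _ _ _ _ C1_with_zero C1_with_zero
    (C1_with_sin delta (w / lam)) C1_with_zero HR HAb).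
Qed.

(* A vortical wave of amplitude [delta], arbitrarily small in Z_2, is driven
   in resonance: its transverse velocity grows linearly in time. *)
Lemma null_solution_unstable U0 c0 rho0 wf k l m :
  0 < U0 -> 0 < c0 -> 0 < rho0 -> wf <> 0 -> k 1%nat * k 2%nat * k 3%nat * k 4%nat <> 0 ->
  ~ (forall eps, 0 < eps -> exists eta, 0 < eta /\
    forall A v, inZ2 c0 rho0 k l m A -> Rbar_lt (Z2norm A) (Finite eta) ->
      GlobalSol U0 c0 rho0 wf A v ->
      forall t, 0 <= t -> Rbar_lt (Z2norm (slice v t)) (Finite eps)).
Proof.
  intros HU Hc Hr Hw Hk Hstab.
  destruct (Hstab 1 Rlt_0_1) as [eta [Heta Hsmall]].
  destruct (k_neq0 k Hk) as (_&_&k3n&_).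
  set (lam := speed3 U0 k).
  assert (Hlam : lam <> 0) by (unfold lam, speed3; apply Rmult_integral_contrapositive; split; lra).
  pose proof (amp_gain_nonneg c0 rho0 k l m) as Hgain.
  set (delta := eta / (2 * (amp_gain c0 rho0 k l m + 1))).
  assert (Hdel : 0 < delta) by (apply Rdiv_lt_0_compat; lra).
  destruct (resonant_data_inZ2 c0 rho0 k l m lam wf delta Hdel) as [HA HAb].
  set (A := Z2amp c0 rho0 k l m _ _ _ _) in HA, HAb.
  assert (HAsmall : Rbar_lt (Z2norm A) (Finite eta)).
  { eapply Rbar_le_lt_trans; [apply Z2norm_le, HAb|]. simpl.
    apply Rmult_lt_reg_r with (2 * (amp_gain c0 rho0 k l m + 1)); [lra|].
    unfold delta. field_simplify; [nra|lra]. }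
  set (v := sol U0 c0 rho0 wf k l m (fun _ => 0) (fun _ => 0)
                (fun s => delta * sin (wf / lam * s)) (fun _ => 0)).
  assert (Hv : GlobalSol U0 c0 rho0 wf A v).
  { intros t0 _. eapply sol_of_rep; eauto using C1_with_zero, C1_with_sin.
    repeat split; intros; reflexivity. }
  destruct (resonant_growth delta wf Hdel Hw) as [HT Hbig].
  set (T := 2 / delta + 1 / Rabs wf + 1) in *.
  pose proof (Rbar_le_lt_trans _ _ _ (Z2norm_ge_G (slice v T) (lam * T / k 3%nat) 0 0)
    (Hsmall A v HA HAsmall Hv T HT)) as Hvy.
  simpl in Hvy. rewrite !mode_zero in Hvy.
  replace (xi k l m 3 (lam * T / k 3%nat) 0 0) with (lam * T) in Hvy by (unfold xi; field; auto).
  rewrite mode_resonant in Hvy by auto.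
  rewrite Rmult_0_r, Rmult_0_r, Rplus_0_l, Rminus_0_l, Rabs_Ropp, Rabs_right in Hvy by lra. lra.
Qed.

Theorem proposition23 (U0 c0 rho0 wf : R) (k l m : nat -> R) :
  0 < U0 -> 0 < c0 -> 0 < rho0 -> wf <> 0 ->
  k 1%nat * k 2%nat * k 3%nat * k 4%nat <> 0 ->
  DeltaZ2 c0 rho0 k l m <> 0 ->
  (forall t0, 0 < t0 -> WellPosed U0 c0 rho0 wf k l m t0) /\
  ~ NullStable U0 c0 rho0 wf k l m.
Proof.
  intros HU Hc Hr Hw Hk HD. split.
  - intros t0 _. split.
    + intros A HA. apply (existence_uniqueness U0 c0 rho0 wf k l m); auto.
    + intros An A vn v. apply (continuous_dependence U0 c0 rho0 wf k l m); auto.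
  - intros [_ Hstable]. exact (null_solution_unstable U0 c0 rho0 wf k l m HU Hc Hr Hw Hk Hstable).
Qed.
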